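(* Let $(L,H)$ be a correspondence-cover of a cycle $C$ such that $|L(v)|\geq 2$ for all $v\in V(C)$ and $|L(v)|\geq 3$ for at least three vertices $v$ of $C$. Then $(L,H)$ has a fractional packing.
   Context: A correspondence-cover of a graph $G$ is a pair $(L,H)$ where $H$ is a graph and $L$ maps each $v\in V(G)$ to a subset $L(v)\subseteq V(H)$ such that: the sets $L(v)$ partition $V(H)$; each $L(v)$ induces a clique in $H$; if $uv\notin E(G)$ there are no edges of $H$ between $L(u)$ and $L(v)$; if $uv\in E(G)$ the edges of $H$ between $L(u)$ and $L(v)$ form a matching. An independent transversal is an independent set of $H$ containing exactly one vertex of each $L(v)$. A cover has a fractional packing if there is a probability distribution on independent transversals $I$ such that $\Pr(x\in I)=1/|L(v)|$ for every vertex $v$ and every $x\in L(v)$ (lists need not have equal sizes). *)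

From mathcomp Require Import all_boot all_order all_algebra.
From mathcomp Require Import reals.
Set Implicit Arguments. Unset Strict Implicit. Unset Printing Implicit Defensive.
Import Order.TTheory GRing.Theory Num.Theory.

(* The cycle C_n on vertex set 'I_n (n >= 3 assumed where used):
   i ~ j iff j = i+1 mod n or i = j+1 mod n. *)
Definition cycle_adj (n : nat) (i j : 'I_n) : bool :=
  (nat_of_ord j == (i.+1 %% n)%N) || (nat_of_ord i == (j.+1 %% n)%N).

Definition simple_graph (V : finType) (h : rel V) : Prop :=
  (forall x y, h x y = h y x) /\ (forall x, ~~ h x x).

Definition correspondence_cover (I V : finType) (adj : rel I)
    (h : rel V) (L : I -> {set V}) : Prop :=
  simple_graph h /\
  (forall x : V, exists v, x \in L v) /\
  (forall (u v : I) (x : V), x \in L u -> x \in L v -> u = v) /\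
  (forall v x y, x \in L v -> y \in L v -> x != y -> h x y) /\
  (forall u v x y, u != v -> ~~ adj u v -> x \in L u -> y \in L v -> ~~ h x y) /\
  (forall u v x, adj u v -> x \in L u -> #|[set y in L v | h x y]| <= 1)%N.

Definition indep_transversal (I V : finType) (h : rel V) (L : I -> {set V})
    (T : {set V}) : bool :=
  [forall x in T, forall y in T, ~~ h x y] &&
  [forall v, #|T :&: L v| == 1%N].

Definition fractional_packing (R : realType) (I V : finType) (h : rel V)
    (L : I -> {set V}) : Prop :=
  exists w : {set V} -> R,
    (forall T, 0 <= w T)%R /\
    (forall T, w T != 0%R -> indep_transversal h L T) /\
    (\sum_(T : {set V}) w T = 1)%R /\
    (forall v x, x \in L v ->
       (\sum_(T : {set V} | x \in T) w T = (#|L v|%:R)^-1)%R).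

From HB Require Import structures.
From mathcomp Require Import all_boot all_algebra.
From mathcomp Require Import reals zify.
Set Implicit Arguments. Unset Strict Implicit. Unset Printing Implicit Defensive.
Import GRing.Theory Num.Theory.

(* Deleting an element [y] from a list with at least three elements leaves a
   cover, and averaging packings of these smaller covers over all choices of [y]
   gives a packing.  It therefore suffices to treat covers in which exactly three
   lists, at positions [0 < q < r], have size [3] and all others size [2].
   Along a run of 2-lists the labels can be arranged so that taking the same
   label everywhere is always independent, so a transversal is described on a
   run by one bit.  Each of the three arcs between the special lists then
   constrains the labels at its ends in one of finitely many ways: through a
   permutation of the three labels, or through two injections from bits to
   labels.  For each of the 27000 triples of constraints, six choices of labels
   and bits, in which every label occurs twice and every bit value three times,
   are checked by computation; the uniform distribution on the corresponding
   transversals is a fractional packing. *)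

(** * Fractional packings of list systems *)

Lemma sum_count_mem (T : finType) (P : pred T) (s : seq T) :
  \sum_(x | P x) count_mem x s = count P s.
Proof.
elim: s => [|a s IH] /=; first by rewrite big1.
rewrite big_split /= IH; congr (_ + _).
case: (boolP (P a)) => Pa; last by rewrite big1 // => x Px; case: eqP Pa => // ->; rewrite Px.
by rewrite (bigD1 a) //= eqxx big1 // => x /andP[_ /negbTE]; rewrite eq_sym => ->.
Qed.

Section ListSystems.
Variables (R : realType) (I V : finType) (adj : rel I) (h : rel V).

Definition disjoint_lists (S : I -> {set V}) : Prop :=
  forall u v x, x \in S u -> x \in S v -> u = v.

Definition subcover (S : I -> {set V}) : Prop :=
  [/\ disjoint_lists S,
      forall u v x y, u != v -> ~~ adj u v -> x \in S u -> y \in S v -> ~~ h x y &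
      forall u v x, adj u v -> x \in S u -> #|[set y in S v | h x y]| <= 1].

Definition independent (T : {set V}) : bool := [forall x in T, forall y in T, ~~ h x y].

(* Elements deleted from the lists may not be used. *)
Definition transversal_of (S : I -> {set V}) (T : {set V}) : bool :=
  [forall v, #|T :&: S v| == 1] && (T \subset \bigcup_v S v).

Definition is_packing (S : I -> {set V}) (w : {set V} -> R) : Prop :=
  [/\ forall T, (0 <= w T)%R,
      forall T, w T != 0%R -> independent T && transversal_of S T,
      (\sum_(T : {set V}) w T = 1)%R &
      forall v x, x \in S v -> (\sum_(T : {set V} | x \in T) w T = #|S v|%:R^-1)%R].

Definition has_packing (S : I -> {set V}) : Prop := exists w, is_packing S w.

Lemma packing_marginal_out (S : I -> {set V}) w x : is_packing S w -> x \notin \bigcup_v S v ->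
  (\sum_(T : {set V} | x \in T) w T = 0)%R.
Proof.
move=> [_ hw _ _] xS; apply: big1 => T xT; apply/eqP; apply: contraR xS.
by move=> /hw /and3P[_ _ /subsetP]; apply.
Qed.

Lemma uniform_packing (S : I -> {set V}) (Ts : seq {set V}) : 0 < size Ts ->
  all (fun T => independent T && transversal_of S T) Ts ->
  (forall v x, x \in S v -> count (fun T : {set V} => x \in T) Ts * #|S v| = size Ts) ->
  has_packing S.
Proof.
move=> Ts0 /allP Tsok hcount.
have sz0 : ((size Ts)%:R != 0 :> R)%R by rewrite pnatr_eq0 -lt0n.
exists (fun T => (count_mem T Ts)%:R / (size Ts)%:R)%R; split.
- by move=> T; rewrite divr_ge0 ?ler0n.
- move=> T; rewrite mulf_eq0 pnatr_eq0 invr_eq0 (negbTE sz0) orbF -lt0n.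
  by rewrite -has_count has_pred1; exact: Tsok.
- by rewrite -mulr_suml -natr_sum (sum_count_mem predT) count_predT mulfV.
- move=> v x xv; rewrite -mulr_suml -natr_sum (sum_count_mem (fun T : {set V} => x \in T)).
  have Sv0 : (#|S v|%:R != 0 :> R)%R.
    by rewrite pnatr_eq0; apply/eqP=> e; move: Ts0; rewrite -(hcount v x xv) e muln0.
  by apply: (mulIf Sv0); rewrite mulVf // mulrAC -natrM hcount // divff.
Qed.

Definition delete_at (S : I -> {set V}) v y : I -> {set V} :=
  fun u => if u == v then S v :\ y else S u.

Lemma delete_at_sub (S : I -> {set V}) v y u : delete_at S v y u \subset S u.
Proof. by rewrite /delete_at; case: eqP => [->|_]; [exact: subsetDl|]. Qed.

Lemma card_delete_at (S : I -> {set V}) v y u : y \in S v ->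
  #|delete_at S v y u| = #|S u| - (u == v).
Proof.
move=> yv; rewrite /delete_at; case: (u =P v) => [->|_]; rewrite ?subn0 //.
by rewrite (cardsD1 y (S v)) yv add1n subn1.
Qed.

Lemma subcover_sub (S S' : I -> {set V}) :
  (forall u, S' u \subset S u) -> subcover S -> subcover S'.
Proof.
move=> sub [hd hn hm]; split.
- by move=> u v x /(subsetP (sub u)) xu /(subsetP (sub v)); exact: hd xu.
- by move=> u v x y uv nadj /(subsetP (sub u)) xu /(subsetP (sub v)); exact: hn uv nadj xu.
- move=> u v x a /(subsetP (sub u)) xu; apply: leq_trans (hm _ _ _ a xu).
  by apply/subset_leq_card/subsetP=> z; rewrite !inE => /andP[/(subsetP (sub v)) -> ->].
Qed.

Lemma transversal_of_delete_at (S : I -> {set V}) v y T : disjoint_lists S -> y \in S v ->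
  transversal_of (delete_at S v y) T -> transversal_of S T.
Proof.
move=> hd yv /andP[/forallP hone /subsetP hcov].
have yT : y \notin T.
  apply/negP => /hcov /bigcupP[u _]; rewrite /delete_at; case: eqP => [_|/eqP uv].
    by rewrite !inE eqxx.
  by move=> yu; move: uv; rewrite (hd _ _ _ yu yv) eqxx.
apply/andP; split.
- apply/forallP => u; move: (hone u); rewrite /delete_at; case: (u =P v) => [->|_] //.
  suff -> : T :&: (S v :\ y) = T :&: S v by [].
  by apply/setP => z; rewrite !inE; case: (z =P y) => // ->; rewrite (negbTE yT).
- apply/subsetP => z /hcov /bigcupP[u _ zu]; apply/bigcupP; exists u => //.
  exact: subsetP (delete_at_sub S v y u) z zu.
Qed.

Lemma delete_at_marginal (S : I -> {set V}) v y w u x : disjoint_lists S -> y \in S v ->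
  is_packing (delete_at S v y) w -> x \in S u ->
  (\sum_(T : {set V} | x \in T) w T = if x == y then 0 else #|delete_at S v y u|%:R^-1)%R.
Proof.
move=> hd yv pw xu; have [_ _ _ hm] := pw; case: (x =P y) => [exy|/eqP nxy].
  apply: packing_marginal_out pw _; apply/bigcupP=> -[u' _].
  rewrite /delete_at exy; case: eqP => [_|/eqP nuv yu']; first by rewrite setD11.
  by move: nuv; rewrite (hd _ _ _ yu' yv) eqxx.
by apply: hm; rewrite /delete_at; case: eqP => [uv|//]; rewrite !inE nxy -uv.
Qed.

Lemma sum_delete_at_marginals (S : I -> {set V}) v u x :
  disjoint_lists S -> 1 < #|S v| -> x \in S u ->
  (\sum_(y in S v) (if x == y then 0 else #|delete_at S v y u|%:R^-1) =
     #|S v|%:R / #|S u|%:R :> R)%R.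
Proof.
move=> hd Sv2 xu; case: (u =P v) => [uv|/eqP nuv]; last first.
  rewrite (eq_bigr (fun=> #|S u|%:R^-1)%R) => [|y yv]; first by rewrite sumr_const mulr_natl.
  rewrite card_delete_at // (negbTE nuv) subn0; case: eqP => // exy.
  by move: nuv; rewrite (hd _ _ _ xu (etrans (congr1 _ exy) yv)) eqxx.
move: xu; rewrite uv => xv; rewrite (bigD1 x) //= eqxx add0r.
rewrite (eq_bigr (fun=> (#|S v|.-1)%:R^-1)%R); last first.
  by move=> y /andP[yv yx]; rewrite eq_sym (negbTE yx) card_delete_at // eqxx subn1.
rewrite (eq_bigl (mem (S v :\ x))) => [|y]; last by rewrite !inE andbC.
rewrite sumr_const; have -> : #|S v :\ x| = #|S v|.-1 by rewrite (cardsD1 x (S v)) xv.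
rewrite -[(_ *+ _)%R]mulr_natr mulVf ?divff // pnatr_eq0 -lt0n //.
  exact: ltnW.
by rewrite -ltnS prednK // ltnW.
Qed.

(* Averaging the packings obtained by deleting each element of [S v] in turn. *)
Lemma has_packing_of_deletions (S : I -> {set V}) v : disjoint_lists S -> 1 < #|S v| ->
  (forall y, y \in S v -> has_packing (delete_at S v y)) -> has_packing S.
Proof.
move=> hd Sv2 hp.
have [W HW] : exists W : V -> {set V} -> R,
    forall y, y \in S v -> is_packing (delete_at S v y) (W y).
  apply: (@fin_all_exists _ (fun _ => {set V} -> R)
           (fun y w => y \in S v -> is_packing (delete_at S v y) w)) => y.
  by case: (boolP (y \in S v)) => [/hp[w hw]|_]; [exists w | exists (fun=> 0%R)].
set k := #|S v|; have k0 : (k%:R != 0 :> R)%R by rewrite pnatr_eq0 -lt0n ltnW.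
exists (fun T => k%:R^-1 * \sum_(y in S v) W y T)%R; split.
- move=> T; rewrite mulr_ge0 ?invr_ge0 ?ler0n ?sumr_ge0 // => y yv.
  by have [] := HW y yv.
- move=> T; rewrite mulf_eq0 invr_eq0 (negbTE k0) /= => /eqP/eqP.
  case: (pickP (fun y => (y \in S v) && (W y T != 0%R))) => [y /andP[yv wy] _|none].
    have [_ /(_ T wy)/andP[indT trT] _ _] := HW y yv.
    by rewrite indT (transversal_of_delete_at hd yv trT).
  by rewrite big1 ?eqxx // => y yv; move: (none y); rewrite yv => /negbFE/eqP.
- rewrite -mulr_sumr exchange_big /= (eq_bigr (fun=> 1%R)); last first.
    by move=> y yv; have [] := HW y yv.
  by rewrite sumr_const mulVf.
- move=> u x xu; rewrite -mulr_sumr exchange_big /=.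
  rewrite (eq_bigr _ (fun y yv => delete_at_marginal hd yv (HW y yv) xu)).
  by rewrite sum_delete_at_marginals // mulKf.
Qed.

Lemma sum_card_delete_at (S : I -> {set V}) v y : y \in S v ->
  (\sum_u #|delete_at S v y u|).+1 = \sum_u #|S u|.
Proof.
move=> yv; rewrite (bigD1 v) //= [RHS](bigD1 v) //= card_delete_at // eqxx subn1.
rewrite -addSn prednK ?card_gt0; last by apply/set0Pn; exists y.
by congr (_ + _); apply: eq_bigr => u /negbTE uv; rewrite card_delete_at // uv subn0.
Qed.

Definition large_lists (S : I -> {set V}) : {set I} := [set v | 3 <= #|S v|].

Lemma large_lists_delete_at (S : I -> {set V}) v y : y \in S v -> 3 <= #|S v| ->
  large_lists (delete_at S v y) = if 3 < #|S v| then large_lists S else large_lists S :\ v.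
Proof.
move=> yv Sv3; apply/setP=> u.
case: ltnP => Sv; rewrite !inE card_delete_at //; case: (u =P v) => [->|_] /=; rewrite ?subn0 //.
  by apply/idP/idP; lia.
by apply/negP; lia.
Qed.

Lemma has_packing_of_core :
  (forall S, subcover S -> (forall v, 2 <= #|S v| <= 3) -> #|large_lists S| = 3 ->
     has_packing S) ->
  forall S, subcover S -> (forall v, 2 <= #|S v|) -> 3 <= #|large_lists S| -> has_packing S.
Proof.
move=> core S; move hm : (\sum_v #|S v|) => m.
elim: m S hm => [|m IH] S hm cS S2 S3.
  have [v] : exists v, v \in large_lists S by apply/set0Pn; rewrite -card_gt0; lia.
  by rewrite inE => Sv3; move: hm; rewrite (bigD1 v) //=; lia.
case: (pickP (fun v => (3 <= #|S v|) && ((3 < #|S v|) || (3 < #|large_lists S|)))).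
  move=> v /andP[Sv3 hv]; have [hd _ _] := cS.
  apply: (has_packing_of_deletions hd (ltnW Sv3)) => y yv; apply: IH.
  - by apply/succn_inj; rewrite sum_card_delete_at.
  - by apply: subcover_sub cS => u; exact: delete_at_sub.
  - move=> u; rewrite card_delete_at //; case: eqP => [->|_] /=; first lia.
    by rewrite subn0.
  - rewrite large_lists_delete_at //; case: (ltnP 3 #|S v|) => [//|Sv].
    by move: hv; rewrite (cardsD1 v) inE Sv3 ltnNge Sv /=; lia.
move=> none; apply: core => //.
  by move=> v; rewrite S2 /=; move: (none v) => /negbT; rewrite negb_and negb_or; lia.
have [v] : exists v, v \in large_lists S by apply/set0Pn; rewrite -card_gt0; lia.
by rewrite inE => Sv3; move: (none v); rewrite Sv3 /=; lia.
Qed.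

End ListSystems.

(** * Rotating the cycle *)

Section Rotation.
Variables (R : realType) (n : nat) (V : finType) (h : rel V).
Local Notation N := n.+1.

Definition rot (p i : 'I_N) : 'I_N := inord ((i + p) %% N).

Lemma rot_val p i : rot p i = (i + p) %% N :> nat.
Proof. by rewrite inordK // ltn_pmod. Qed.

Lemma rot_inj p : injective (rot p).
Proof.
move=> i j /(congr1 (@nat_of_ord N)); rewrite !rot_val => /eqP.
by rewrite eqn_modDr !modn_small // => /eqP/val_inj.
Qed.

Lemma cycle_adj_rot p i j : cycle_adj (rot p i) (rot p j) = cycle_adj i j.
Proof.
suff succE (a b : 'I_N) : (rot p b == (rot p a).+1 %% N :> nat) = (b == a.+1 %% N :> nat).
  by rewrite /cycle_adj !succE.
rewrite !rot_val; have -> : ((a + p) %% N).+1 = (a + p) %% N + 1 by rewrite addn1.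
rewrite modnDml; have -> : a + p + 1 = a.+1 + p by rewrite addnAC addn1.
by rewrite eqn_modDr (modn_small (ltn_ord b)).
Qed.

Lemma subcover_rot p (S : 'I_N -> {set V}) :
  subcover (@cycle_adj N) h S -> subcover (@cycle_adj N) h (S \o rot p).
Proof.
move=> [hd hn hm]; split => /=.
- by move=> u v x xu xv; apply: rot_inj; exact: hd xu xv.
- move=> u v x y uv; rewrite -(cycle_adj_rot p); apply: hn.
  by apply: contra uv => /eqP/rot_inj ->.
- by move=> u v x; rewrite -(cycle_adj_rot p); exact: hm.
Qed.

Lemma has_packing_rot p (S : 'I_N -> {set V}) :
  has_packing R h (S \o rot p) -> has_packing R h S.
Proof.
move=> [w [w0 wT w1 wm]]; have [g rotK grot] := injF_bij (@rot_inj p).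
exists w; split => // [T /wT /andP[indT /andP[one cov]]|v x].
- rewrite indT /=; apply/andP; split.
    by apply/forallP => v; rewrite -(grot v); exact: (forallP one (g v)).
  by rewrite (reindex_inj (@rot_inj p)).
- by rewrite -(grot v); exact: wm.
Qed.

(* With exactly three lists of size [3], a rotation brings them to positions
   [0 < q < r]. *)
Lemma has_packing_of_normal :
  (forall (S : 'I_N -> {set V}) q r, subcover (@cycle_adj N) h S -> 0 < q < r -> r <= n ->
     (forall v : 'I_N, #|S v| = if (v : nat) \in [:: 0; q; r] then 3 else 2) ->
     has_packing R h S) ->
  forall S : 'I_N -> {set V}, subcover (@cycle_adj N) h S -> (forall v, 2 <= #|S v| <= 3) ->
    #|large_lists S| = 3 -> has_packing R h S.
Proof.
move=> normal S cS S23 large3.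
have [p] : exists p, p \in large_lists S by apply/set0Pn; rewrite -card_gt0 large3.
rewrite inE => Sp; apply: (@has_packing_rot p); set S' := S \o rot p.
have largeE : large_lists S' = rot p @^-1: large_lists S by apply/setP => v; rewrite !inE.
have large0 : ord0 \in large_lists S'.
  have p0 : rot p ord0 = p by apply: ord_inj; rewrite rot_val add0n modn_small.
  by rewrite inE /S' /= p0.
have card3 : #|large_lists S'| = 3 by rewrite largeE card_preimset //; exact: rot_inj.
have /cards2P[a [b [ab Eab]]] : #|large_lists S' :\ ord0| == 2.
  by move: card3; rewrite (cardsD1 ord0) large0 add1n => -[->].
wlog lt_ab : a b ab Eab / a < b.
  move=> hyp; case: (ltngtP a b) => [|ba|/val_inj e]; first exact: hyp.
    by apply: (hyp b a); rewrite 1?eq_sym // setUC.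
  by rewrite e eqxx in ab.
have memE (v : 'I_N) : (3 <= #|S' v|) = ((v : nat) \in [:: 0; a : nat; b : nat]).
  have := setD1K large0; rewrite Eab => /setP/(_ v); rewrite !inE -!(inj_eq (@ord_inj N)).
  by move=> <-.
have a0 : 0 < a.
  have := set21 a b; rewrite -Eab !inE => /andP[a0 _].
  by rewrite lt0n; apply: contra a0 => /eqP a0; apply/eqP/ord_inj.
apply: (normal S' a b (subcover_rot p cS)); first by rewrite a0.
  by rewrite -ltnS.
by move=> v; rewrite -memE /S' /=; case: ifP; move: (S23 (rot p v)); lia.
Qed.

End Rotation.

(** * Link types and the finite certificate *)

(* The constraint put by an arc of the cycle between two consecutive lists of
   size [3], with labels [0], [1], [2], on the labels [x], [y] picked at its
   ends.  A single edge is handled by a permutation [p] whose graph contains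
   its matching: [y != p x] suffices.  A run of 2-lists is labelled so that a
   bit [s] determines the whole run, and [x != a_s], [y != b_s] suffice. *)
Inductive link := Direct of seq nat | Run of nat & nat & nat & nat.

(* Labels at the special positions [0], [q], [r] and bits of the arcs
   [0 -> q], [q -> r], [r -> 0]. *)
Record config := Config {
  lab0 : nat; labq : nat; labr : nat; bit1 : bool; bit2 : bool; bit3 : bool }.

Definition link_allows (k : link) (x : nat) (s : bool) (y : nat) : bool :=
  match k with
  | Direct p => y != nth 0 p x
  | Run a0 a1 b0 b1 => (x != (if s then a1 else a0)) && (y != (if s then b1 else b0))
  end.

Definition link_eqb (k1 k2 : link) : bool :=
  match k1, k2 with
  | Direct p, Direct p' => p == p'
  | Run a b c d, Run a' b' c' d' => [&& a == a', b == b', c == c' & d == d']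
  | _, _ => false
  end.

Lemma link_eqP : Equality.axiom link_eqb.
Proof.
case=> [p|a b c d] [p'|a' b' c' d'] /=; try by constructor.
- by apply: (iffP eqP) => [->|[->]].
- apply: (iffP and4P) => [[/eqP-> /eqP-> /eqP-> /eqP->] //|[-> -> -> ->]].
  by split; apply/eqP.
Qed.
HB.instance Definition _ := hasDecEq.Build link link_eqP.

Lemma config_eq_dec (w w' : config) : {w = w'} + {w <> w'}.
Proof. by decide equality; apply: eq_comparable. Qed.
HB.instance Definition _ := hasDecEq.Build config (compareP config_eq_dec).

Definition labels : seq nat := iota 0 3.
Definition bools : seq bool := [:: false; true].

Lemma mem_labels x : (x \in labels) = (x < 3).
Proof. by rewrite mem_iota. Qed.

Lemma mem_bools (b : bool) : b \in bools.
Proof. by case: b. Qed.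

Definition perms3 : seq (seq nat) :=
  [:: [:: 0; 1; 2]; [:: 0; 2; 1]; [:: 1; 0; 2]; [:: 1; 2; 0]; [:: 2; 0; 1]; [:: 2; 1; 0]].
Definition injections2 : seq (nat * nat) :=
  [:: (0, 1); (0, 2); (1, 0); (1, 2); (2, 0); (2, 1)].
Definition links : seq link :=
  map Direct perms3 ++ [seq Run ab.1 ab.2 cd.1 cd.2 | ab <- injections2, cd <- injections2].

(* Witnesses for the triples whose first two links are normalized to
   [Direct [:: 0; 1; 2]] or [Run a0 a1 0 1] with [a0 < a1], and whose third
   link, if a run, has [a0 < a1]. *)
Definition witness_table : seq (link * link * link * seq config) := [::
  (Direct [:: 0; 1; 2], Direct [:: 0; 1; 2], Direct [:: 0; 1; 2], [:: Config 0 1 2 false false false; Config 0 1 2 false false false; Config 1 2 0 false false false; Config 1 2 0 true true true; Config 2 0 1 true true true; Config 2 0 1 true true true]);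
  (Direct [:: 0; 1; 2], Direct [:: 0; 1; 2], Direct [:: 0; 2; 1], [:: Config 0 1 2 false false false; Config 0 2 1 false false false; Config 1 0 1 false false false; Config 1 2 0 true true true; Config 2 0 2 true true true; Config 2 1 0 true true true]);
  (Direct [:: 0; 1; 2], Direct [:: 0; 1; 2], Direct [:: 1; 0; 2], [:: Config 0 1 2 false false false; Config 0 2 0 false false false; Config 1 0 2 false false false; Config 1 2 1 true true true; Config 2 0 1 true true true; Config 2 1 0 true true true]);
  (Direct [:: 0; 1; 2], Direct [:: 0; 1; 2], Direct [:: 1; 2; 0], [:: Config 0 1 0 false false false; Config 0 1 0 false false false; Config 1 2 1 false false false; Config 1 2 1 true true true; Config 2 0 2 true true true; Config 2 0 2 true true true]);
  (Direct [:: 0; 1; 2], Direct [:: 0; 1; 2], Direct [:: 2; 0; 1], [:: Config 0 1 0 false false false; Config 0 1 0 false false false; Config 1 2 1 false false false; Config 1 2 1 true true true; Config 2 0 2 true true true; Config 2 0 2 true true true]);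
  (Direct [:: 0; 1; 2], Direct [:: 0; 1; 2], Direct [:: 2; 1; 0], [:: Config 0 1 0 false false false; Config 0 2 1 false false false; Config 1 0 2 false false false; Config 1 2 0 true true true; Config 2 0 1 true true true; Config 2 1 2 true true true]);
  (Direct [:: 0; 1; 2], Direct [:: 0; 1; 2], Run 0 1 0 1, [:: Config 0 1 0 false false true; Config 0 1 0 false false true; Config 1 2 1 false false false; Config 1 2 1 true true false; Config 2 0 2 true true false; Config 2 0 2 true true true]);
  (Direct [:: 0; 1; 2], Direct [:: 0; 1; 2], Run 0 1 0 2, [:: Config 0 1 0 false false true; Config 0 1 2 false false true; Config 1 2 0 false false true; Config 1 2 1 true true false; Config 2 0 1 true true false; Config 2 0 2 true true false]);
  (Direct [:: 0; 1; 2], Direct [:: 0; 1; 2], Run 0 1 1 0, [:: Config 0 1 2 false false false; Config 0 2 1 false false false; Config 1 0 2 false false true; Config 1 2 0 true true true; Config 2 0 1 true true false; Config 2 1 0 true true true]);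
  (Direct [:: 0; 1; 2], Direct [:: 0; 1; 2], Run 0 1 1 2, [:: Config 0 1 0 false false true; Config 0 2 1 false false false; Config 1 0 2 false false true; Config 1 2 0 true true true; Config 2 0 1 true true false; Config 2 1 2 true true false]);
  (Direct [:: 0; 1; 2], Direct [:: 0; 1; 2], Run 0 1 2 0, [:: Config 0 1 2 false false false; Config 0 2 1 false false false; Config 1 0 1 false false false; Config 1 2 0 true true true; Config 2 0 2 true true true; Config 2 1 0 true true true]);
  (Direct [:: 0; 1; 2], Direct [:: 0; 1; 2], Run 0 1 2 1, [:: Config 0 1 0 false false true; Config 0 2 1 false false false; Config 1 0 2 false false false; Config 1 2 1 true true false; Config 2 0 2 true true true; Config 2 1 0 true true true]);
  (Direct [:: 0; 1; 2], Direct [:: 0; 1; 2], Run 0 2 0 1, [:: Config 0 1 0 false false true; Config 0 2 0 false false true; Config 1 0 2 false false false; Config 1 2 1 true true false; Config 2 0 1 true true true; Config 2 1 2 true true false]);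
  (Direct [:: 0; 1; 2], Direct [:: 0; 1; 2], Run 0 2 0 2, [:: Config 0 1 0 false false true; Config 0 1 0 false false true; Config 1 2 1 false false false; Config 1 2 1 true true true; Config 2 0 2 true true false; Config 2 0 2 true true false]);
  (Direct [:: 0; 1; 2], Direct [:: 0; 1; 2], Run 0 2 1 0, [:: Config 0 1 2 false false false; Config 0 1 2 false false false; Config 1 2 0 false false true; Config 1 2 0 true true true; Config 2 0 1 true true false; Config 2 0 1 true true true]);
  (Direct [:: 0; 1; 2], Direct [:: 0; 1; 2], Run 0 2 1 2, [:: Config 0 1 0 false false true; Config 0 1 2 false false false; Config 1 2 0 false false true; Config 1 2 1 true true true; Config 2 0 1 true true false; Config 2 0 2 true true false]);
  (Direct [:: 0; 1; 2], Direct [:: 0; 1; 2], Run 0 2 2 0, [:: Config 0 1 2 false false false; Config 0 2 1 false false false; Config 1 0 2 false false false; Config 1 2 0 true true true; Config 2 0 1 true true true; Config 2 1 0 true true true]);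
  (Direct [:: 0; 1; 2], Direct [:: 0; 1; 2], Run 0 2 2 1, [:: Config 0 1 2 false false false; Config 0 2 0 false false true; Config 1 0 2 false false false; Config 1 2 1 true true false; Config 2 0 1 true true true; Config 2 1 0 true true true]);
  (Direct [:: 0; 1; 2], Direct [:: 0; 1; 2], Run 1 2 0 1, [:: Config 0 1 0 false false true; Config 0 2 1 false false true; Config 1 0 2 false false false; Config 1 2 0 true true false; Config 2 0 1 true true true; Config 2 1 2 true true false]);
  (Direct [:: 0; 1; 2], Direct [:: 0; 1; 2], Run 1 2 0 2, [:: Config 0 1 0 false false true; Config 0 2 1 false false true; Config 1 0 1 false false true; Config 1 2 0 true true false; Config 2 0 2 true true false; Config 2 1 2 true true false]);
  (Direct [:: 0; 1; 2], Direct [:: 0; 1; 2], Run 1 2 1 0, [:: Config 0 1 0 false false false; Config 0 1 2 false false false; Config 1 2 0 false false true; Config 1 2 1 true true true; Config 2 0 1 true true true; Config 2 0 2 true true false]);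
  (Direct [:: 0; 1; 2], Direct [:: 0; 1; 2], Run 1 2 1 2, [:: Config 0 1 0 false false false; Config 0 1 0 false false true; Config 1 2 1 false false true; Config 1 2 1 true true true; Config 2 0 2 true true false; Config 2 0 2 true true false]);
  (Direct [:: 0; 1; 2], Direct [:: 0; 1; 2], Run 1 2 2 0, [:: Config 0 1 2 false false false; Config 0 1 2 false false false; Config 1 2 0 false false false; Config 1 2 0 true true true; Config 2 0 1 true true true; Config 2 0 1 true true true]);
  (Direct [:: 0; 1; 2], Direct [:: 0; 1; 2], Run 1 2 2 1, [:: Config 0 1 2 false false false; Config 0 2 1 false false true; Config 1 0 2 false false false; Config 1 2 0 true true false; Config 2 0 1 true true true; Config 2 1 0 true true true]);
  (Direct [:: 0; 1; 2], Run 0 1 0 1, Direct [:: 0; 1; 2], [:: Config 0 1 1 false false false; Config 0 1 1 false false false; Config 1 2 2 false false false; Config 1 2 2 true true true; Config 2 0 0 true true true; Config 2 0 0 true true true]);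
  (Direct [:: 0; 1; 2], Run 0 1 0 1, Direct [:: 0; 2; 1], [:: Config 0 1 1 false false false; Config 0 1 2 false false false; Config 1 2 0 false true false; Config 1 2 1 true false true; Config 2 0 0 true true true; Config 2 0 2 true true true]);
  (Direct [:: 0; 1; 2], Run 0 1 0 1, Direct [:: 1; 0; 2], [:: Config 0 1 2 false false false; Config 0 2 0 false true false; Config 1 0 2 false true false; Config 1 2 1 true false true; Config 2 0 0 true true true; Config 2 1 1 true false true]);
  (Direct [:: 0; 1; 2], Run 0 1 0 1, Direct [:: 1; 2; 0], [:: Config 0 1 1 false false false; Config 0 1 1 false false false; Config 1 2 2 false false false; Config 1 2 2 true true true; Config 2 0 0 true true true; Config 2 0 0 true true true]);
  (Direct [:: 0; 1; 2], Run 0 1 0 1, Direct [:: 2; 0; 1], [:: Config 0 1 2 false false false; Config 0 2 0 false true false; Config 1 0 0 false true false; Config 1 2 1 true false true; Config 2 0 2 true true true; Config 2 1 1 true false true]);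
  (Direct [:: 0; 1; 2], Run 0 1 0 1, Direct [:: 2; 1; 0], [:: Config 0 1 1 false false false; Config 0 2 0 false true false; Config 1 0 0 false true false; Config 1 2 2 true false true; Config 2 0 2 true true true; Config 2 1 1 true false true]);
  (Direct [:: 0; 1; 2], Run 0 1 0 1, Run 0 1 0 1, [:: Config 0 1 2 false false true; Config 0 2 0 false true true; Config 1 0 2 false true false; Config 1 2 1 true false false; Config 2 0 0 true true true; Config 2 1 1 true false false]);
  (Direct [:: 0; 1; 2], Run 0 1 0 1, Run 0 1 0 2, [:: Config 0 1 2 false false true; Config 0 2 0 false true true; Config 1 0 0 false true true; Config 1 2 1 true false false; Config 2 0 2 true true false; Config 2 1 1 true false false]);
  (Direct [:: 0; 1; 2], Run 0 1 0 1, Run 0 1 1 0, [:: Config 0 1 1 false false false; Config 0 1 1 false false false; Config 1 2 0 false true true; Config 1 2 2 true false true; Config 2 0 0 true true true; Config 2 0 2 true true false]);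
  (Direct [:: 0; 1; 2], Run 0 1 0 1, Run 0 1 1 2, [:: Config 0 1 1 false false false; Config 0 2 0 false true true; Config 1 0 0 false true true; Config 1 2 2 true false true; Config 2 0 2 true true false; Config 2 1 1 true false false]);
  (Direct [:: 0; 1; 2], Run 0 1 0 1, Run 0 1 2 0, [:: Config 0 1 1 false false false; Config 0 1 1 false false false; Config 1 2 0 false true true; Config 1 2 2 true false false; Config 2 0 0 true true true; Config 2 0 2 true true true]);
  (Direct [:: 0; 1; 2], Run 0 1 0 1, Run 0 1 2 1, [:: Config 0 1 1 false false false; Config 0 1 2 false false true; Config 1 2 1 false false false; Config 1 2 2 true true false; Config 2 0 0 true true true; Config 2 0 0 true true true]);
  (Direct [:: 0; 1; 2], Run 0 1 0 1, Run 0 2 0 1, [:: Config 0 1 1 false false true; Config 0 2 0 false true true; Config 1 0 2 false true false; Config 1 2 1 true false false; Config 2 0 0 true true true; Config 2 1 2 true false false]);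
  (Direct [:: 0; 1; 2], Run 0 1 0 1, Run 0 2 0 2, [:: Config 0 1 1 false false true; Config 0 2 0 false true true; Config 1 0 0 false true true; Config 1 2 1 true false false; Config 2 0 2 true true false; Config 2 1 2 true false false]);
  (Direct [:: 0; 1; 2], Run 0 1 0 1, Run 0 2 1 0, [:: Config 0 1 1 false false false; Config 0 1 2 false false false; Config 1 2 0 false true true; Config 1 2 1 true false true; Config 2 0 0 true true true; Config 2 0 2 true true false]);
  (Direct [:: 0; 1; 2], Run 0 1 0 1, Run 0 2 1 2, [:: Config 0 1 1 false false false; Config 0 2 0 false true true; Config 1 0 0 false true true; Config 1 2 1 true false true; Config 2 0 2 true true false; Config 2 1 2 true false false]);
  (Direct [:: 0; 1; 2], Run 0 1 0 1, Run 0 2 2 0, [:: Config 0 1 1 false false false; Config 0 1 2 false false false; Config 1 2 1 false false true; Config 1 2 2 true true false; Config 2 0 0 true true true; Config 2 0 0 true true true]);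
  (Direct [:: 0; 1; 2], Run 0 1 0 1, Run 0 2 2 1, [:: Config 0 1 1 false false false; Config 0 1 1 false false true; Config 1 2 2 false false false; Config 1 2 2 true true false; Config 2 0 0 true true true; Config 2 0 0 true true true]);
  (Direct [:: 0; 1; 2], Run 0 1 0 1, Run 1 2 0 1, [:: Config 0 1 1 false false true; Config 0 1 1 false false true; Config 1 2 0 false true false; Config 1 2 2 true false false; Config 2 0 0 true true true; Config 2 0 2 true true false]);
  (Direct [:: 0; 1; 2], Run 0 1 0 1, Run 1 2 0 2, [:: Config 0 1 1 false false true; Config 0 1 1 false false true; Config 1 2 0 false true true; Config 1 2 2 true false false; Config 2 0 0 true true false; Config 2 0 2 true true false]);
  (Direct [:: 0; 1; 2], Run 0 1 0 1, Run 1 2 1 0, [:: Config 0 1 2 false false false; Config 0 2 0 false true false; Config 1 0 0 false true true; Config 1 2 1 true false true; Config 2 0 2 true true false; Config 2 1 1 true false true]);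
  (Direct [:: 0; 1; 2], Run 0 1 0 1, Run 1 2 1 2, [:: Config 0 1 1 false false true; Config 0 1 2 false false false; Config 1 2 0 false true true; Config 1 2 1 true false true; Config 2 0 0 true true false; Config 2 0 2 true true false]);
  (Direct [:: 0; 1; 2], Run 0 1 0 1, Run 1 2 2 0, [:: Config 0 1 2 false false false; Config 0 2 0 false true false; Config 1 0 2 false true false; Config 1 2 1 true false true; Config 2 0 0 true true true; Config 2 1 1 true false true]);
  (Direct [:: 0; 1; 2], Run 0 1 0 1, Run 1 2 2 1, [:: Config 0 1 1 false false true; Config 0 2 0 false true false; Config 1 0 2 false true false; Config 1 2 2 true false false; Config 2 0 0 true true true; Config 2 1 1 true false true]);
  (Direct [:: 0; 1; 2], Run 0 2 0 1, Direct [:: 0; 1; 2], [:: Config 0 1 1 false false false; Config 0 2 1 false false false; Config 1 0 2 false true false; Config 1 2 2 true false true; Config 2 0 0 true true true; Config 2 1 0 true true true]);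
  (Direct [:: 0; 1; 2], Run 0 2 0 1, Direct [:: 0; 2; 1], [:: Config 0 1 1 false false false; Config 0 2 2 false false false; Config 1 0 0 false true false; Config 1 2 1 true false true; Config 2 0 0 true true true; Config 2 1 2 true true true]);
  (Direct [:: 0; 1; 2], Run 0 2 0 1, Direct [:: 1; 0; 2], [:: Config 0 1 0 false true false; Config 0 2 2 false false false; Config 1 0 2 false true false; Config 1 2 1 true false true; Config 2 0 0 true true true; Config 2 1 1 true false true]);
  (Direct [:: 0; 1; 2], Run 0 2 0 1, Direct [:: 1; 2; 0], [:: Config 0 1 0 false true false; Config 0 1 1 false false false; Config 1 2 1 false false false; Config 1 2 2 true false true; Config 2 0 0 true true true; Config 2 0 2 true true true]);
  (Direct [:: 0; 1; 2], Run 0 2 0 1, Direct [:: 2; 0; 1], [:: Config 0 1 0 false true false; Config 0 2 2 false false false; Config 1 0 0 false true false; Config 1 2 1 true false true; Config 2 0 2 true true true; Config 2 1 1 true false true]);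
  (Direct [:: 0; 1; 2], Run 0 2 0 1, Direct [:: 2; 1; 0], [:: Config 0 1 0 false true false; Config 0 2 1 false false false; Config 1 0 0 false true false; Config 1 2 2 true false true; Config 2 0 2 true true true; Config 2 1 1 true false true]);
  (Direct [:: 0; 1; 2], Run 0 2 0 1, Run 0 1 0 1, [:: Config 0 1 0 false true true; Config 0 1 2 false false true; Config 1 2 1 false false false; Config 1 2 1 true false false; Config 2 0 0 true true true; Config 2 0 2 true true false]);
  (Direct [:: 0; 1; 2], Run 0 2 0 1, Run 0 1 0 2, [:: Config 0 1 0 false true true; Config 0 2 2 false false true; Config 1 0 0 false true true; Config 1 2 1 true false false; Config 2 0 2 true true false; Config 2 1 1 true false false]);
  (Direct [:: 0; 1; 2], Run 0 2 0 1, Run 0 1 1 0, [:: Config 0 1 1 false false false; Config 0 2 1 false false false; Config 1 0 0 false true true; Config 1 2 2 true false true; Config 2 0 0 true true true; Config 2 1 2 true true false]);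
  (Direct [:: 0; 1; 2], Run 0 2 0 1, Run 0 1 1 2, [:: Config 0 1 0 false true true; Config 0 2 1 false false false; Config 1 0 0 false true true; Config 1 2 2 true false true; Config 2 0 2 true true false; Config 2 1 1 true false false]);
  (Direct [:: 0; 1; 2], Run 0 2 0 1, Run 0 1 2 0, [:: Config 0 1 1 false false false; Config 0 1 2 false true false; Config 1 2 1 false false false; Config 1 2 2 true false true; Config 2 0 0 true true true; Config 2 0 0 true true true]);
  (Direct [:: 0; 1; 2], Run 0 2 0 1, Run 0 1 2 1, [:: Config 0 1 0 false true true; Config 0 1 1 false false false; Config 1 2 1 false false false; Config 1 2 2 true false false; Config 2 0 0 true true true; Config 2 0 2 true true true]);
  (Direct [:: 0; 1; 2], Run 0 2 0 1, Run 0 2 0 1, [:: Config 0 1 0 false true true; Config 0 1 1 false false true; Config 1 2 1 false false false; Config 1 2 2 true false false; Config 2 0 0 true true true; Config 2 0 2 true true false]);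
  (Direct [:: 0; 1; 2], Run 0 2 0 1, Run 0 2 0 2, [:: Config 0 1 0 false true true; Config 0 2 1 false false true; Config 1 0 0 false true true; Config 1 2 1 true false false; Config 2 0 2 true true false; Config 2 1 2 true false false]);
  (Direct [:: 0; 1; 2], Run 0 2 0 1, Run 0 2 1 0, [:: Config 0 1 1 false false false; Config 0 2 2 false false false; Config 1 0 0 false true true; Config 1 2 1 true false true; Config 2 0 0 true true true; Config 2 1 2 true true false]);
  (Direct [:: 0; 1; 2], Run 0 2 0 1, Run 0 2 1 2, [:: Config 0 1 0 false true true; Config 0 2 1 false false false; Config 1 0 0 false true true; Config 1 2 1 true false true; Config 2 0 2 true true false; Config 2 1 2 true false false]);
  (Direct [:: 0; 1; 2], Run 0 2 0 1, Run 0 2 2 0, [:: Config 0 1 1 false false false; Config 0 1 2 false true false; Config 1 2 1 false false true; Config 1 2 2 true false false; Config 2 0 0 true true true; Config 2 0 0 true true true]);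
  (Direct [:: 0; 1; 2], Run 0 2 0 1, Run 0 2 2 1, [:: Config 0 1 0 false true true; Config 0 2 1 false false false; Config 1 0 2 false true false; Config 1 2 2 true false false; Config 2 0 0 true true true; Config 2 1 1 true false true]);
  (Direct [:: 0; 1; 2], Run 0 2 0 1, Run 1 2 0 1, [:: Config 0 1 0 false true true; Config 0 2 1 false false true; Config 1 0 0 false true false; Config 1 2 2 true false false; Config 2 0 2 true true false; Config 2 1 1 true false true]);
  (Direct [:: 0; 1; 2], Run 0 2 0 1, Run 1 2 0 2, [:: Config 0 1 0 false true true; Config 0 1 1 false false true; Config 1 2 1 false false true; Config 1 2 2 true false false; Config 2 0 0 true true false; Config 2 0 2 true true false]);
  (Direct [:: 0; 1; 2], Run 0 2 0 1, Run 1 2 1 0, [:: Config 0 1 0 false true false; Config 0 1 2 false false false; Config 1 2 1 false false true; Config 1 2 1 true false true; Config 2 0 0 true true true; Config 2 0 2 true true false]);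
  (Direct [:: 0; 1; 2], Run 0 2 0 1, Run 1 2 1 2, [:: Config 0 1 0 false true false; Config 0 2 1 false false true; Config 1 0 0 false true true; Config 1 2 1 true false true; Config 2 0 2 true true false; Config 2 1 2 true false false]);
  (Direct [:: 0; 1; 2], Run 0 2 0 1, Run 1 2 2 0, [:: Config 0 1 0 false true false; Config 0 2 2 false false false; Config 1 0 2 false true false; Config 1 2 1 true false true; Config 2 0 0 true true true; Config 2 1 1 true false true]);
  (Direct [:: 0; 1; 2], Run 0 2 0 1, Run 1 2 2 1, [:: Config 0 1 0 false true false; Config 0 2 1 false false true; Config 1 0 2 false true false; Config 1 2 2 true false false; Config 2 0 0 true true true; Config 2 1 1 true false true]);
  (Direct [:: 0; 1; 2], Run 1 2 0 1, Direct [:: 0; 1; 2], [:: Config 0 1 2 false true false; Config 0 2 1 false false false; Config 1 0 0 false true false; Config 1 2 2 true false true; Config 2 0 1 true false true; Config 2 1 0 true true true]);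
  (Direct [:: 0; 1; 2], Run 1 2 0 1, Direct [:: 0; 2; 1], [:: Config 0 1 2 false true false; Config 0 2 1 false false false; Config 1 0 0 false true false; Config 1 2 1 true false true; Config 2 0 2 true false true; Config 2 1 0 true true true]);
  (Direct [:: 0; 1; 2], Run 1 2 0 1, Direct [:: 1; 0; 2], [:: Config 0 1 0 false true false; Config 0 1 2 false true false; Config 1 2 1 false false false; Config 1 2 2 true false true; Config 2 0 0 true true true; Config 2 0 1 true false true]);
  (Direct [:: 0; 1; 2], Run 1 2 0 1, Direct [:: 1; 2; 0], [:: Config 0 1 0 false true false; Config 0 1 0 false true false; Config 1 2 1 false false false; Config 1 2 1 true false true; Config 2 0 2 true false true; Config 2 0 2 true true true]);
  (Direct [:: 0; 1; 2], Run 1 2 0 1, Direct [:: 2; 0; 1], [:: Config 0 1 0 false true false; Config 0 1 0 false true false; Config 1 2 1 false false false; Config 1 2 1 true false true; Config 2 0 2 true false true; Config 2 0 2 true true true]);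
  (Direct [:: 0; 1; 2], Run 1 2 0 1, Direct [:: 2; 1; 0], [:: Config 0 1 0 false true false; Config 0 2 1 false false false; Config 1 0 0 false true false; Config 1 2 2 true false true; Config 2 0 1 true false true; Config 2 1 2 true true true]);
  (Direct [:: 0; 1; 2], Run 1 2 0 1, Run 0 1 0 1, [:: Config 0 1 0 false true true; Config 0 1 0 false true true; Config 1 2 1 false false false; Config 1 2 1 true false false; Config 2 0 2 true false false; Config 2 0 2 true true true]);
  (Direct [:: 0; 1; 2], Run 1 2 0 1, Run 0 1 0 2, [:: Config 0 1 0 false true true; Config 0 1 0 false true true; Config 1 2 1 false false false; Config 1 2 2 true false true; Config 2 0 1 true false false; Config 2 0 2 true true false]);
  (Direct [:: 0; 1; 2], Run 1 2 0 1, Run 0 1 1 0, [:: Config 0 1 2 false true false; Config 0 2 1 false false false; Config 1 0 0 false true true; Config 1 2 2 true false true; Config 2 0 1 true false false; Config 2 1 0 true true true]);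
  (Direct [:: 0; 1; 2], Run 1 2 0 1, Run 0 1 1 2, [:: Config 0 1 0 false true true; Config 0 2 1 false false false; Config 1 0 0 false true true; Config 1 2 2 true false true; Config 2 0 1 true false false; Config 2 1 2 true true false]);
  (Direct [:: 0; 1; 2], Run 1 2 0 1, Run 0 1 2 0, [:: Config 0 1 2 false true false; Config 0 2 1 false false false; Config 1 0 0 false true true; Config 1 2 1 true false false; Config 2 0 2 true false true; Config 2 1 0 true true true]);
  (Direct [:: 0; 1; 2], Run 1 2 0 1, Run 0 1 2 1, [:: Config 0 1 0 false true true; Config 0 1 2 false true false; Config 1 2 1 false false false; Config 1 2 1 true false false; Config 2 0 0 true true true; Config 2 0 2 true false true]);
  (Direct [:: 0; 1; 2], Run 1 2 0 1, Run 0 2 0 1, [:: Config 0 1 0 false true true; Config 0 1 0 false true true; Config 1 2 1 false false false; Config 1 2 2 true false false; Config 2 0 1 true false true; Config 2 0 2 true true false]);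
  (Direct [:: 0; 1; 2], Run 1 2 0 1, Run 0 2 0 2, [:: Config 0 1 0 false true true; Config 0 1 0 false true true; Config 1 2 1 false false false; Config 1 2 1 true false true; Config 2 0 2 true false false; Config 2 0 2 true true false]);
  (Direct [:: 0; 1; 2], Run 1 2 0 1, Run 0 2 1 0, [:: Config 0 1 2 false true false; Config 0 2 1 false false false; Config 1 0 0 false true true; Config 1 2 1 true false true; Config 2 0 2 true false false; Config 2 1 0 true true true]);
  (Direct [:: 0; 1; 2], Run 1 2 0 1, Run 0 2 1 2, [:: Config 0 1 0 false true true; Config 0 2 1 false false false; Config 1 0 0 false true true; Config 1 2 1 true false true; Config 2 0 2 true false false; Config 2 1 2 true true false]);
  (Direct [:: 0; 1; 2], Run 1 2 0 1, Run 0 2 2 0, [:: Config 0 1 2 false true false; Config 0 2 1 false false false; Config 1 0 0 false true true; Config 1 2 2 true false false; Config 2 0 1 true false true; Config 2 1 0 true true true]);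
  (Direct [:: 0; 1; 2], Run 1 2 0 1, Run 0 2 2 1, [:: Config 0 1 0 false true true; Config 0 1 2 false true false; Config 1 2 1 false false false; Config 1 2 2 true false false; Config 2 0 0 true true true; Config 2 0 1 true false true]);
  (Direct [:: 0; 1; 2], Run 1 2 0 1, Run 1 2 0 1, [:: Config 0 1 0 false true true; Config 0 2 1 false false true; Config 1 0 0 false true false; Config 1 2 2 true false false; Config 2 0 1 true false true; Config 2 1 2 true true false]);
  (Direct [:: 0; 1; 2], Run 1 2 0 1, Run 1 2 0 2, [:: Config 0 1 0 false true true; Config 0 2 1 false false true; Config 1 0 0 false true false; Config 1 2 1 true false true; Config 2 0 2 true false false; Config 2 1 2 true true false]);
  (Direct [:: 0; 1; 2], Run 1 2 0 1, Run 1 2 1 0, [:: Config 0 1 0 false true false; Config 0 1 2 false true false; Config 1 2 1 false false true; Config 1 2 1 true false true; Config 2 0 0 true true true; Config 2 0 2 true false false]);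
  (Direct [:: 0; 1; 2], Run 1 2 0 1, Run 1 2 1 2, [:: Config 0 1 0 false true false; Config 0 1 0 false true true; Config 1 2 1 false false true; Config 1 2 1 true false true; Config 2 0 2 true false false; Config 2 0 2 true true false]);
  (Direct [:: 0; 1; 2], Run 1 2 0 1, Run 1 2 2 0, [:: Config 0 1 0 false true false; Config 0 1 2 false true false; Config 1 2 1 false false true; Config 1 2 2 true false false; Config 2 0 0 true true true; Config 2 0 1 true false true]);
  (Direct [:: 0; 1; 2], Run 1 2 0 1, Run 1 2 2 1, [:: Config 0 1 0 false true false; Config 0 2 1 false false true; Config 1 0 2 false true false; Config 1 2 2 true false false; Config 2 0 1 true false true; Config 2 1 0 true true true]);
  (Run 0 1 0 1, Direct [:: 0; 1; 2], Direct [:: 0; 1; 2], [:: Config 0 0 1 true false false; Config 0 0 1 true false false; Config 1 1 2 false false false; Config 1 1 2 false true true; Config 2 2 0 false true true; Config 2 2 0 true true true]);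
  (Run 0 1 0 1, Direct [:: 0; 1; 2], Direct [:: 0; 2; 1], [:: Config 0 0 1 true false false; Config 0 0 2 true false false; Config 1 1 0 false false false; Config 1 2 1 false true true; Config 2 1 2 false true true; Config 2 2 0 true true true]);
  (Run 0 1 0 1, Direct [:: 0; 1; 2], Direct [:: 1; 0; 2], [:: Config 0 0 2 true false false; Config 0 2 0 true false false; Config 1 1 2 false false false; Config 1 2 1 false true true; Config 2 0 1 true true true; Config 2 1 0 false true true]);
  (Run 0 1 0 1, Direct [:: 0; 1; 2], Direct [:: 1; 2; 0], [:: Config 0 0 1 true false false; Config 0 0 1 true false false; Config 1 1 2 false false false; Config 1 1 2 false true true; Config 2 2 0 false true true; Config 2 2 0 true true true]);
  (Run 0 1 0 1, Direct [:: 0; 1; 2], Direct [:: 2; 0; 1], [:: Config 0 0 2 true false false; Config 0 0 2 true false false; Config 1 1 0 false false false; Config 1 1 0 false true true; Config 2 2 1 false true true; Config 2 2 1 true true true]);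
  (Run 0 1 0 1, Direct [:: 0; 1; 2], Direct [:: 2; 1; 0], [:: Config 0 0 1 true false false; Config 0 2 0 true false false; Config 1 1 0 false false false; Config 1 1 2 false true true; Config 2 0 2 true true true; Config 2 2 1 false true true]);
  (Run 0 1 0 1, Direct [:: 0; 1; 2], Run 0 1 0 1, [:: Config 0 0 2 true false true; Config 0 2 0 true false true; Config 1 1 2 false false false; Config 1 2 1 false true false; Config 2 0 1 true true false; Config 2 1 0 false true true]);
  (Run 0 1 0 1, Direct [:: 0; 1; 2], Run 0 1 0 2, [:: Config 0 0 2 true false true; Config 0 2 0 true false true; Config 1 1 0 false false true; Config 1 1 2 false true false; Config 2 0 1 true true false; Config 2 2 1 false true false]);
  (Run 0 1 0 1, Direct [:: 0; 1; 2], Run 0 1 1 0, [:: Config 0 0 1 true false false; Config 0 0 1 true false false; Config 1 1 2 false false true; Config 1 2 0 false true true; Config 2 1 2 false true false; Config 2 2 0 true true true]);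
  (Run 0 1 0 1, Direct [:: 0; 1; 2], Run 0 1 1 2, [:: Config 0 0 1 true false false; Config 0 0 2 true false true; Config 1 1 0 false false true; Config 1 2 0 false true true; Config 2 1 2 false true false; Config 2 2 1 true true false]);
  (Run 0 1 0 1, Direct [:: 0; 1; 2], Run 0 1 2 0, [:: Config 0 0 1 true false false; Config 0 0 1 true false false; Config 1 1 2 false false false; Config 1 1 2 false true true; Config 2 2 0 false true true; Config 2 2 0 true true true]);
  (Run 0 1 0 1, Direct [:: 0; 1; 2], Run 0 1 2 1, [:: Config 0 0 1 true false false; Config 0 0 2 true false true; Config 1 1 2 false false false; Config 1 2 1 false true false; Config 2 1 0 false true true; Config 2 2 0 true true true]);
  (Run 0 1 0 1, Direct [:: 0; 1; 2], Run 0 2 0 1, [:: Config 0 0 1 true false true; Config 0 2 0 true false true; Config 1 1 2 false false false; Config 1 1 2 false true false; Config 2 0 1 true true false; Config 2 2 0 false true true]);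
  (Run 0 1 0 1, Direct [:: 0; 1; 2], Run 0 2 0 2, [:: Config 0 0 1 true false true; Config 0 2 0 true false true; Config 1 1 0 false false true; Config 1 1 2 false true false; Config 2 0 2 true true false; Config 2 2 1 false true false]);
  (Run 0 1 0 1, Direct [:: 0; 1; 2], Run 0 2 1 0, [:: Config 0 0 1 true false false; Config 0 0 2 true false false; Config 1 1 0 false false true; Config 1 2 0 false true true; Config 2 1 2 false true false; Config 2 2 1 true true true]);
  (Run 0 1 0 1, Direct [:: 0; 1; 2], Run 0 2 1 2, [:: Config 0 0 1 true false false; Config 0 2 0 true false true; Config 1 1 0 false false true; Config 1 2 1 false true true; Config 2 0 2 true true false; Config 2 1 2 false true false]);
  (Run 0 1 0 1, Direct [:: 0; 1; 2], Run 0 2 2 0, [:: Config 0 0 1 true false false; Config 0 0 2 true false false; Config 1 1 0 false false true; Config 1 1 2 false true false; Config 2 2 0 false true true; Config 2 2 1 true true true]);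
  (Run 0 1 0 1, Direct [:: 0; 1; 2], Run 0 2 2 1, [:: Config 0 0 1 true false false; Config 0 0 1 true false true; Config 1 1 2 false false false; Config 1 1 2 false true false; Config 2 2 0 false true true; Config 2 2 0 true true true]);
  (Run 0 1 0 1, Direct [:: 0; 1; 2], Run 1 2 0 1, [:: Config 0 0 1 true false true; Config 0 0 1 true false true; Config 1 1 2 false false false; Config 1 1 2 false true false; Config 2 2 0 false true false; Config 2 2 0 true true true]);
  (Run 0 1 0 1, Direct [:: 0; 1; 2], Run 1 2 0 2, [:: Config 0 0 1 true false true; Config 0 0 1 true false true; Config 1 1 2 false false false; Config 1 2 0 false true true; Config 2 1 2 false true false; Config 2 2 0 true true false]);
  (Run 0 1 0 1, Direct [:: 0; 1; 2], Run 1 2 1 0, [:: Config 0 0 2 true false false; Config 0 0 2 true false false; Config 1 1 0 false false true; Config 1 2 1 false true true; Config 2 1 0 false true false; Config 2 2 1 true true true]);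
  (Run 0 1 0 1, Direct [:: 0; 1; 2], Run 1 2 1 2, [:: Config 0 0 1 true false true; Config 0 0 2 true false false; Config 1 1 0 false false true; Config 1 2 1 false true true; Config 2 1 2 false true false; Config 2 2 0 true true false]);
  (Run 0 1 0 1, Direct [:: 0; 1; 2], Run 1 2 2 0, [:: Config 0 0 2 true false false; Config 0 0 2 true false false; Config 1 1 0 false false false; Config 1 1 0 false true true; Config 2 2 1 false true true; Config 2 2 1 true true true]);
  (Run 0 1 0 1, Direct [:: 0; 1; 2], Run 1 2 2 1, [:: Config 0 0 1 true false true; Config 0 0 2 true false false; Config 1 1 0 false false false; Config 1 1 2 false true false; Config 2 2 0 false true true; Config 2 2 1 true true true]);
  (Run 0 1 0 1, Run 0 1 0 1, Direct [:: 0; 1; 2], [:: Config 0 0 2 true true false; Config 0 2 1 true false false; Config 1 1 2 false false false; Config 1 2 0 false true true; Config 2 0 0 true true true; Config 2 1 1 false false true]);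
  (Run 0 1 0 1, Run 0 1 0 1, Direct [:: 0; 2; 1], [:: Config 0 0 2 true true false; Config 0 2 1 true false false; Config 1 1 1 false false false; Config 1 2 0 false true true; Config 2 0 0 true true true; Config 2 1 2 false false true]);
  (Run 0 1 0 1, Run 0 1 0 1, Direct [:: 1; 0; 2], [:: Config 0 0 0 true true false; Config 0 0 0 true true false; Config 1 1 2 false false false; Config 1 2 2 false true true; Config 2 1 1 false false true; Config 2 2 1 true false true]);
  (Run 0 1 0 1, Run 0 1 0 1, Direct [:: 1; 2; 0], [:: Config 0 0 0 true true false; Config 0 0 0 true true false; Config 1 1 1 false false false; Config 1 1 1 false false true; Config 2 2 2 false false true; Config 2 2 2 true true true]);
  (Run 0 1 0 1, Run 0 1 0 1, Direct [:: 2; 0; 1], [:: Config 0 0 0 true true false; Config 0 0 0 true true false; Config 1 1 1 false false false; Config 1 1 1 false false true; Config 2 2 2 false false true; Config 2 2 2 true true true]);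
  (Run 0 1 0 1, Run 0 1 0 1, Direct [:: 2; 1; 0], [:: Config 0 0 0 true true false; Config 0 0 0 true true false; Config 1 1 2 false false false; Config 1 2 2 false true true; Config 2 1 1 false false true; Config 2 2 1 true false true]);
  (Run 0 1 0 1, Run 0 1 0 1, Run 0 1 0 1, [:: Config 0 0 0 true true true; Config 0 0 0 true true true; Config 1 1 1 false false false; Config 1 1 1 false false false; Config 2 2 2 false false false; Config 2 2 2 true true true]);
  (Run 0 1 0 1, Run 0 1 0 1, Run 0 1 0 2, [:: Config 0 0 0 true true true; Config 0 0 0 true true true; Config 1 1 1 false false false; Config 1 1 2 false false true; Config 2 2 1 false false false; Config 2 2 2 true true false]);
  (Run 0 1 0 1, Run 0 1 0 1, Run 0 1 1 0, [:: Config 0 0 2 true true false; Config 0 2 1 true false false; Config 1 1 2 false false true; Config 1 2 0 false true true; Config 2 0 0 true true true; Config 2 1 1 false false false]);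
  (Run 0 1 0 1, Run 0 1 0 1, Run 0 1 1 2, [:: Config 0 0 0 true true true; Config 0 0 2 true true false; Config 1 1 2 false false true; Config 1 2 0 false true true; Config 2 1 1 false false false; Config 2 2 1 true false false]);
  (Run 0 1 0 1, Run 0 1 0 1, Run 0 1 2 0, [:: Config 0 0 2 true true false; Config 0 2 1 true false false; Config 1 1 1 false false false; Config 1 1 2 false false true; Config 2 0 0 true true true; Config 2 2 0 false true true]);
  (Run 0 1 0 1, Run 0 1 0 1, Run 0 1 2 1, [:: Config 0 0 0 true true true; Config 0 0 2 true true false; Config 1 1 1 false false false; Config 1 1 1 false false false; Config 2 2 0 false true true; Config 2 2 2 true false true]);
  (Run 0 1 0 1, Run 0 1 0 1, Run 0 2 0 1, [:: Config 0 0 0 true true true; Config 0 0 0 true true true; Config 1 1 1 false false false; Config 1 1 2 false false false; Config 2 2 1 false false true; Config 2 2 2 true true false]);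
  (Run 0 1 0 1, Run 0 1 0 1, Run 0 2 0 2, [:: Config 0 0 0 true true true; Config 0 0 0 true true true; Config 1 1 1 false false false; Config 1 1 1 false false true; Config 2 2 2 false false false; Config 2 2 2 true true false]);
  (Run 0 1 0 1, Run 0 1 0 1, Run 0 2 1 0, [:: Config 0 0 2 true true false; Config 0 2 1 true false false; Config 1 1 1 false false true; Config 1 2 0 false true true; Config 2 0 0 true true true; Config 2 1 2 false false false]);
  (Run 0 1 0 1, Run 0 1 0 1, Run 0 2 1 2, [:: Config 0 0 0 true true true; Config 0 0 2 true true false; Config 1 1 1 false false true; Config 1 2 0 false true true; Config 2 1 1 false false false; Config 2 2 2 true false false]);
  (Run 0 1 0 1, Run 0 1 0 1, Run 0 2 2 0, [:: Config 0 0 2 true true false; Config 0 2 1 true false false; Config 1 1 1 false false true; Config 1 1 2 false false false; Config 2 0 0 true true true; Config 2 2 0 false true true]);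
  (Run 0 1 0 1, Run 0 1 0 1, Run 0 2 2 1, [:: Config 0 0 0 true true true; Config 0 0 2 true true false; Config 1 1 1 false false false; Config 1 1 2 false false false; Config 2 2 0 false true true; Config 2 2 1 true false true]);
  (Run 0 1 0 1, Run 0 1 0 1, Run 1 2 0 1, [:: Config 0 0 0 true true true; Config 0 2 1 true false true; Config 1 1 2 false false false; Config 1 2 0 false true false; Config 2 0 2 true true false; Config 2 1 1 false false true]);
  (Run 0 1 0 1, Run 0 1 0 1, Run 1 2 0 2, [:: Config 0 0 0 true true true; Config 0 2 1 true false true; Config 1 1 1 false false true; Config 1 1 2 false false false; Config 2 0 0 true true false; Config 2 2 2 false true false]);
  (Run 0 1 0 1, Run 0 1 0 1, Run 1 2 1 0, [:: Config 0 0 0 true true false; Config 0 0 2 true true false; Config 1 1 1 false false true; Config 1 1 1 false false true; Config 2 2 0 false true true; Config 2 2 2 true false false]);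
  (Run 0 1 0 1, Run 0 1 0 1, Run 1 2 1 2, [:: Config 0 0 0 true true false; Config 0 0 0 true true true; Config 1 1 1 false false true; Config 1 1 1 false false true; Config 2 2 2 false false false; Config 2 2 2 true true false]);
  (Run 0 1 0 1, Run 0 1 0 1, Run 1 2 2 0, [:: Config 0 0 0 true true false; Config 0 0 2 true true false; Config 1 1 1 false false true; Config 1 1 2 false false false; Config 2 2 0 false true true; Config 2 2 1 true false true]);
  (Run 0 1 0 1, Run 0 1 0 1, Run 1 2 2 1, [:: Config 0 0 0 true true false; Config 0 0 0 true true true; Config 1 1 2 false false false; Config 1 2 2 false true false; Config 2 1 1 false false true; Config 2 2 1 true false true]);
  (Run 0 1 0 1, Run 0 2 0 1, Direct [:: 0; 1; 2], [:: Config 0 0 2 true true false; Config 0 2 1 true false false; Config 1 1 0 false true false; Config 1 1 2 false false true; Config 2 0 0 true true true; Config 2 2 1 false false true]);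
  (Run 0 1 0 1, Run 0 2 0 1, Direct [:: 0; 2; 1], [:: Config 0 0 2 true true false; Config 0 2 1 true false false; Config 1 1 0 false true false; Config 1 1 1 false false true; Config 2 0 0 true true true; Config 2 2 2 false false true]);
  (Run 0 1 0 1, Run 0 2 0 1, Direct [:: 1; 0; 2], [:: Config 0 0 0 true true false; Config 0 0 0 true true false; Config 1 1 2 false false false; Config 1 1 2 false true true; Config 2 2 1 false false true; Config 2 2 1 true false true]);
  (Run 0 1 0 1, Run 0 2 0 1, Direct [:: 1; 2; 0], [:: Config 0 0 0 true true false; Config 0 0 0 true true false; Config 1 1 1 false false false; Config 1 2 1 false false true; Config 2 1 2 false true true; Config 2 2 2 true false true]);
  (Run 0 1 0 1, Run 0 2 0 1, Direct [:: 2; 0; 1], [:: Config 0 0 0 true true false; Config 0 0 0 true true false; Config 1 1 1 false false false; Config 1 2 1 false false true; Config 2 1 2 false true true; Config 2 2 2 true false true]);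
  (Run 0 1 0 1, Run 0 2 0 1, Direct [:: 2; 1; 0], [:: Config 0 0 0 true true false; Config 0 0 0 true true false; Config 1 1 2 false false false; Config 1 1 2 false true true; Config 2 2 1 false false true; Config 2 2 1 true false true]);
  (Run 0 1 0 1, Run 0 2 0 1, Run 0 1 0 1, [:: Config 0 0 0 true true true; Config 0 0 0 true true true; Config 1 1 1 false false false; Config 1 1 2 false true false; Config 2 2 1 false false false; Config 2 2 2 true false true]);
  (Run 0 1 0 1, Run 0 2 0 1, Run 0 1 0 2, [:: Config 0 0 0 true true true; Config 0 0 0 true true true; Config 1 1 1 false false false; Config 1 1 2 false true true; Config 2 2 1 false false false; Config 2 2 2 true false false]);
  (Run 0 1 0 1, Run 0 2 0 1, Run 0 1 1 0, [:: Config 0 0 2 true true false; Config 0 2 1 true false false; Config 1 1 0 false true true; Config 1 1 2 false false true; Config 2 0 0 true true true; Config 2 2 1 false false false]);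
  (Run 0 1 0 1, Run 0 2 0 1, Run 0 1 1 2, [:: Config 0 0 0 true true true; Config 0 0 2 true true false; Config 1 1 0 false true true; Config 1 1 2 false false true; Config 2 2 1 false false false; Config 2 2 1 true false false]);
  (Run 0 1 0 1, Run 0 2 0 1, Run 0 1 2 0, [:: Config 0 0 2 true true false; Config 0 2 1 true false false; Config 1 1 0 false true true; Config 1 1 1 false false false; Config 2 0 0 true true true; Config 2 2 2 false false true]);
  (Run 0 1 0 1, Run 0 2 0 1, Run 0 1 2 1, [:: Config 0 0 0 true true true; Config 0 0 2 true true false; Config 1 1 1 false false false; Config 1 2 1 false false false; Config 2 1 0 false true true; Config 2 2 2 true false true]);
  (Run 0 1 0 1, Run 0 2 0 1, Run 0 2 0 1, [:: Config 0 0 0 true true true; Config 0 0 0 true true true; Config 1 1 1 false false false; Config 1 1 2 false true false; Config 2 2 1 false false true; Config 2 2 2 true false false]);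
  (Run 0 1 0 1, Run 0 2 0 1, Run 0 2 0 2, [:: Config 0 0 0 true true true; Config 0 0 0 true true true; Config 1 1 1 false false false; Config 1 2 1 false false true; Config 2 1 2 false true false; Config 2 2 2 true false false]);
  (Run 0 1 0 1, Run 0 2 0 1, Run 0 2 1 0, [:: Config 0 0 2 true true false; Config 0 2 1 true false false; Config 1 1 0 false true true; Config 1 1 1 false false true; Config 2 0 0 true true true; Config 2 2 2 false false false]);
  (Run 0 1 0 1, Run 0 2 0 1, Run 0 2 1 2, [:: Config 0 0 0 true true true; Config 0 0 2 true true false; Config 1 1 0 false true true; Config 1 1 1 false false true; Config 2 2 1 false false false; Config 2 2 2 true false false]);
  (Run 0 1 0 1, Run 0 2 0 1, Run 0 2 2 0, [:: Config 0 0 2 true true false; Config 0 2 1 true false false; Config 1 1 0 false true true; Config 1 1 2 false false false; Config 2 0 0 true true true; Config 2 2 1 false false true]);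
  (Run 0 1 0 1, Run 0 2 0 1, Run 0 2 2 1, [:: Config 0 0 0 true true true; Config 0 0 2 true true false; Config 1 1 1 false false false; Config 1 2 2 false false false; Config 2 1 0 false true true; Config 2 2 1 true false true]);
  (Run 0 1 0 1, Run 0 2 0 1, Run 1 2 0 1, [:: Config 0 0 0 true true true; Config 0 2 1 true false true; Config 1 1 0 false true false; Config 1 1 2 false false false; Config 2 0 2 true true false; Config 2 2 1 false false true]);
  (Run 0 1 0 1, Run 0 2 0 1, Run 1 2 0 2, [:: Config 0 0 0 true true true; Config 0 2 1 true false true; Config 1 1 0 false true false; Config 1 1 1 false false true; Config 2 0 2 true true false; Config 2 2 2 false false false]);
  (Run 0 1 0 1, Run 0 2 0 1, Run 1 2 1 0, [:: Config 0 0 0 true true false; Config 0 0 2 true true false; Config 1 1 0 false true true; Config 1 1 1 false false true; Config 2 2 1 false false true; Config 2 2 2 true false false]);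
  (Run 0 1 0 1, Run 0 2 0 1, Run 1 2 1 2, [:: Config 0 0 0 true true false; Config 0 0 0 true true true; Config 1 1 1 false false true; Config 1 2 1 false false true; Config 2 1 2 false true false; Config 2 2 2 true false false]);
  (Run 0 1 0 1, Run 0 2 0 1, Run 1 2 2 0, [:: Config 0 0 0 true true false; Config 0 0 2 true true false; Config 1 1 0 false true true; Config 1 1 2 false false false; Config 2 2 1 false false true; Config 2 2 1 true false true]);
  (Run 0 1 0 1, Run 0 2 0 1, Run 1 2 2 1, [:: Config 0 0 0 true true false; Config 0 0 0 true true true; Config 1 1 2 false false false; Config 1 1 2 false true false; Config 2 2 1 false false true; Config 2 2 1 true false true]);
  (Run 0 1 0 1, Run 1 2 0 1, Direct [:: 0; 1; 2], [:: Config 0 0 1 true false false; Config 0 0 2 true true false; Config 1 1 0 false true false; Config 1 2 2 false false true; Config 2 1 0 false true true; Config 2 2 1 true false true]);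
  (Run 0 1 0 1, Run 1 2 0 1, Direct [:: 0; 2; 1], [:: Config 0 0 1 true false false; Config 0 0 2 true true false; Config 1 1 0 false true false; Config 1 2 1 false false true; Config 2 1 0 false true true; Config 2 2 2 true false true]);
  (Run 0 1 0 1, Run 1 2 0 1, Direct [:: 1; 0; 2], [:: Config 0 0 0 true true false; Config 0 0 2 true false false; Config 1 1 2 false true false; Config 1 2 1 false false true; Config 2 1 0 false true true; Config 2 2 1 true false true]);
  (Run 0 1 0 1, Run 1 2 0 1, Direct [:: 1; 2; 0], [:: Config 0 0 0 true true false; Config 0 0 1 true false false; Config 1 1 2 false true false; Config 1 2 1 false false true; Config 2 1 0 false true true; Config 2 2 2 true false true]);
  (Run 0 1 0 1, Run 1 2 0 1, Direct [:: 2; 0; 1], [:: Config 0 0 0 true true false; Config 0 0 2 true false false; Config 1 1 0 false true false; Config 1 2 1 false false true; Config 2 1 2 false true true; Config 2 2 1 true false true]);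
  (Run 0 1 0 1, Run 1 2 0 1, Direct [:: 2; 1; 0], [:: Config 0 0 0 true true false; Config 0 0 1 true false false; Config 1 1 0 false true false; Config 1 1 2 false true true; Config 2 2 1 false false true; Config 2 2 2 true false true]);
  (Run 0 1 0 1, Run 1 2 0 1, Run 0 1 0 1, [:: Config 0 0 0 true true true; Config 0 0 2 true false true; Config 1 1 2 false true false; Config 1 2 1 false false false; Config 2 1 0 false true true; Config 2 2 1 true false false]);
  (Run 0 1 0 1, Run 1 2 0 1, Run 0 1 0 2, [:: Config 0 0 0 true true true; Config 0 0 2 true false true; Config 1 1 0 false true true; Config 1 1 2 false true false; Config 2 2 1 false false false; Config 2 2 1 true false false]);
  (Run 0 1 0 1, Run 1 2 0 1, Run 0 1 1 0, [:: Config 0 0 1 true false false; Config 0 0 2 true true false; Config 1 1 0 false true true; Config 1 1 0 false true true; Config 2 2 1 false false false; Config 2 2 2 true false true]);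
  (Run 0 1 0 1, Run 1 2 0 1, Run 0 1 1 2, [:: Config 0 0 0 true true true; Config 0 0 1 true false false; Config 1 1 0 false true true; Config 1 1 2 false true true; Config 2 2 1 false false false; Config 2 2 2 true false false]);
  (Run 0 1 0 1, Run 1 2 0 1, Run 0 1 2 0, [:: Config 0 0 1 true false false; Config 0 0 2 true true false; Config 1 1 0 false true true; Config 1 2 1 false false false; Config 2 1 0 false true true; Config 2 2 2 true false true]);
  (Run 0 1 0 1, Run 1 2 0 1, Run 0 1 2 1, [:: Config 0 0 0 true true true; Config 0 0 1 true false false; Config 1 1 2 false true false; Config 1 2 1 false false false; Config 2 1 0 false true true; Config 2 2 2 true false true]);
  (Run 0 1 0 1, Run 1 2 0 1, Run 0 2 0 1, [:: Config 0 0 0 true true true; Config 0 0 1 true false true; Config 1 1 2 false true false; Config 1 2 1 false false false; Config 2 1 0 false true true; Config 2 2 2 true false false]);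
  (Run 0 1 0 1, Run 1 2 0 1, Run 0 2 0 2, [:: Config 0 0 0 true true true; Config 0 0 1 true false true; Config 1 1 0 false true true; Config 1 1 2 false true false; Config 2 2 1 false false false; Config 2 2 2 true false false]);
  (Run 0 1 0 1, Run 1 2 0 1, Run 0 2 1 0, [:: Config 0 0 1 true false false; Config 0 0 2 true true false; Config 1 1 0 false true true; Config 1 1 0 false true true; Config 2 2 1 false false true; Config 2 2 2 true false false]);
  (Run 0 1 0 1, Run 1 2 0 1, Run 0 2 1 2, [:: Config 0 0 0 true true true; Config 0 0 1 true false false; Config 1 1 0 false true true; Config 1 2 1 false false true; Config 2 1 2 false true false; Config 2 2 2 true false false]);
  (Run 0 1 0 1, Run 1 2 0 1, Run 0 2 2 0, [:: Config 0 0 1 true false false; Config 0 0 2 true true false; Config 1 1 0 false true true; Config 1 2 2 false false false; Config 2 1 0 false true true; Config 2 2 1 true false true]);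
  (Run 0 1 0 1, Run 1 2 0 1, Run 0 2 2 1, [:: Config 0 0 0 true true true; Config 0 0 1 true false false; Config 1 1 2 false true false; Config 1 2 2 false false false; Config 2 1 0 false true true; Config 2 2 1 true false true]);
  (Run 0 1 0 1, Run 1 2 0 1, Run 1 2 0 1, [:: Config 0 0 0 true true true; Config 0 0 1 true false true; Config 1 1 0 false true false; Config 1 1 2 false true false; Config 2 2 1 false false true; Config 2 2 2 true false false]);
  (Run 0 1 0 1, Run 1 2 0 1, Run 1 2 0 2, [:: Config 0 0 0 true true true; Config 0 0 1 true false true; Config 1 1 0 false true false; Config 1 2 1 false false true; Config 2 1 2 false true false; Config 2 2 2 true false false]);
  (Run 0 1 0 1, Run 1 2 0 1, Run 1 2 1 0, [:: Config 0 0 0 true true false; Config 0 0 2 true false false; Config 1 1 0 false true true; Config 1 2 1 false false true; Config 2 1 2 false true false; Config 2 2 1 true false true]);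
  (Run 0 1 0 1, Run 1 2 0 1, Run 1 2 1 2, [:: Config 0 0 0 true true false; Config 0 0 1 true false true; Config 1 1 0 false true true; Config 1 2 1 false false true; Config 2 1 2 false true false; Config 2 2 2 true false false]);
  (Run 0 1 0 1, Run 1 2 0 1, Run 1 2 2 0, [:: Config 0 0 0 true true false; Config 0 0 2 true false false; Config 1 1 0 false true true; Config 1 1 2 false true false; Config 2 2 1 false false true; Config 2 2 1 true false true]);
  (Run 0 1 0 1, Run 1 2 0 1, Run 1 2 2 1, [:: Config 0 0 0 true true false; Config 0 0 1 true false true; Config 1 1 2 false true false; Config 1 2 2 false false false; Config 2 1 0 false true true; Config 2 2 1 true false true]);
  (Run 0 2 0 1, Direct [:: 0; 1; 2], Direct [:: 0; 1; 2], [:: Config 0 0 1 true false false; Config 0 0 2 true false false; Config 1 1 2 false false false; Config 1 2 0 true true true; Config 2 1 0 false true true; Config 2 2 1 false true true]);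
  (Run 0 2 0 1, Direct [:: 0; 1; 2], Direct [:: 0; 2; 1], [:: Config 0 0 1 true false false; Config 0 0 1 true false false; Config 1 2 0 false false false; Config 1 2 0 true true true; Config 2 1 2 false true true; Config 2 1 2 false true true]);
  (Run 0 2 0 1, Direct [:: 0; 1; 2], Direct [:: 1; 0; 2], [:: Config 0 0 2 true false false; Config 0 0 2 true false false; Config 1 2 1 false false false; Config 1 2 1 true true true; Config 2 1 0 false true true; Config 2 1 0 false true true]);
  (Run 0 2 0 1, Direct [:: 0; 1; 2], Direct [:: 1; 2; 0], [:: Config 0 0 1 true false false; Config 0 2 0 true false false; Config 1 0 1 true false false; Config 1 1 2 false true true; Config 2 1 2 false true true; Config 2 2 0 false true true]);
  (Run 0 2 0 1, Direct [:: 0; 1; 2], Direct [:: 2; 0; 1], [:: Config 0 0 2 true false false; Config 0 2 0 true false false; Config 1 0 1 true false false; Config 1 1 0 false true true; Config 2 1 2 false true true; Config 2 2 1 false true true]);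
  (Run 0 2 0 1, Direct [:: 0; 1; 2], Direct [:: 2; 1; 0], [:: Config 0 0 1 true false false; Config 0 0 1 true false false; Config 1 2 0 false false false; Config 1 2 0 true true true; Config 2 1 2 false true true; Config 2 1 2 false true true]);
  (Run 0 2 0 1, Direct [:: 0; 1; 2], Run 0 1 0 1, [:: Config 0 0 2 true false true; Config 0 2 0 true false true; Config 1 0 1 true false false; Config 1 1 2 false true false; Config 2 1 0 false true true; Config 2 2 1 false true false]);
  (Run 0 2 0 1, Direct [:: 0; 1; 2], Run 0 1 0 2, [:: Config 0 0 2 true false true; Config 0 2 0 true false true; Config 1 0 1 true false false; Config 1 1 0 false true true; Config 2 1 2 false true false; Config 2 2 1 false true false]);
  (Run 0 2 0 1, Direct [:: 0; 1; 2], Run 0 1 1 0, [:: Config 0 0 1 true false false; Config 0 0 1 true false false; Config 1 1 2 false false true; Config 1 2 0 true true true; Config 2 1 2 false true false; Config 2 2 0 false true true]);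
  (Run 0 2 0 1, Direct [:: 0; 1; 2], Run 0 1 1 2, [:: Config 0 0 1 true false false; Config 0 0 2 true false true; Config 1 1 0 false false true; Config 1 2 0 true true true; Config 2 1 2 false true false; Config 2 2 1 false true false]);
  (Run 0 2 0 1, Direct [:: 0; 1; 2], Run 0 1 2 0, [:: Config 0 0 1 true false false; Config 0 0 1 true false false; Config 1 1 2 false false false; Config 1 2 0 true true true; Config 2 1 2 false true true; Config 2 2 0 false true true]);
  (Run 0 2 0 1, Direct [:: 0; 1; 2], Run 0 1 2 1, [:: Config 0 0 1 true false false; Config 0 0 2 true false true; Config 1 1 2 false false false; Config 1 2 1 true true false; Config 2 1 0 false true true; Config 2 2 0 false true true]);
  (Run 0 2 0 1, Direct [:: 0; 1; 2], Run 0 2 0 1, [:: Config 0 0 1 true false true; Config 0 2 0 true false true; Config 1 0 1 true false false; Config 1 1 2 false true false; Config 2 1 2 false true false; Config 2 2 0 false true true]);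
  (Run 0 2 0 1, Direct [:: 0; 1; 2], Run 0 2 0 2, [:: Config 0 0 1 true false true; Config 0 2 0 true false true; Config 1 0 1 true false false; Config 1 2 0 false true true; Config 2 1 2 false true false; Config 2 1 2 false true false]);
  (Run 0 2 0 1, Direct [:: 0; 1; 2], Run 0 2 1 0, [:: Config 0 0 1 true false false; Config 0 0 2 true false false; Config 1 1 0 false false true; Config 1 2 0 true true true; Config 2 1 2 false true false; Config 2 2 1 false true true]);
  (Run 0 2 0 1, Direct [:: 0; 1; 2], Run 0 2 1 2, [:: Config 0 0 1 true false false; Config 0 0 1 true false true; Config 1 2 0 false false true; Config 1 2 0 true true true; Config 2 1 2 false true false; Config 2 1 2 false true false]);
  (Run 0 2 0 1, Direct [:: 0; 1; 2], Run 0 2 2 0, [:: Config 0 0 1 true false false; Config 0 0 2 true false false; Config 1 1 2 false false false; Config 1 2 0 true true true; Config 2 1 0 false true true; Config 2 2 1 false true true]);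
  (Run 0 2 0 1, Direct [:: 0; 1; 2], Run 0 2 2 1, [:: Config 0 0 1 true false false; Config 0 2 0 true false true; Config 1 0 2 true false false; Config 1 1 2 false true false; Config 2 1 0 false true true; Config 2 2 1 false true true]);
  (Run 0 2 0 1, Direct [:: 0; 1; 2], Run 1 2 0 1, [:: Config 0 0 1 true false true; Config 0 0 1 true false true; Config 1 1 2 false false false; Config 1 2 0 true true false; Config 2 1 2 false true false; Config 2 2 0 false true true]);
  (Run 0 2 0 1, Direct [:: 0; 1; 2], Run 1 2 0 2, [:: Config 0 0 1 true false true; Config 0 0 1 true false true; Config 1 1 2 false false false; Config 1 2 0 true true true; Config 2 1 2 false true false; Config 2 2 0 false true false]);
  (Run 0 2 0 1, Direct [:: 0; 1; 2], Run 1 2 1 0, [:: Config 0 0 2 true false false; Config 0 0 2 true false false; Config 1 1 0 false false true; Config 1 2 1 true true true; Config 2 1 0 false true false; Config 2 2 1 false true true]);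
  (Run 0 2 0 1, Direct [:: 0; 1; 2], Run 1 2 1 2, [:: Config 0 0 1 true false true; Config 0 0 2 true false false; Config 1 1 0 false false true; Config 1 2 1 true true true; Config 2 1 2 false true false; Config 2 2 0 false true false]);
  (Run 0 2 0 1, Direct [:: 0; 1; 2], Run 1 2 2 0, [:: Config 0 0 2 true false false; Config 0 0 2 true false false; Config 1 1 0 false false false; Config 1 2 1 true true true; Config 2 1 0 false true true; Config 2 2 1 false true true]);
  (Run 0 2 0 1, Direct [:: 0; 1; 2], Run 1 2 2 1, [:: Config 0 0 1 true false true; Config 0 0 2 true false false; Config 1 1 2 false false false; Config 1 2 0 true true false; Config 2 1 0 false true true; Config 2 2 1 false true true]);
  (Run 0 2 0 1, Run 0 1 0 1, Direct [:: 0; 1; 2], [:: Config 0 0 2 true true false; Config 0 2 1 true false false; Config 1 0 0 true true false; Config 1 1 2 false false true; Config 2 1 1 false false true; Config 2 2 0 false true true]);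
  (Run 0 2 0 1, Run 0 1 0 1, Direct [:: 0; 2; 1], [:: Config 0 0 2 true true false; Config 0 2 1 true false false; Config 1 0 0 true true false; Config 1 1 1 false false true; Config 2 1 2 false false true; Config 2 2 0 false true true]);
  (Run 0 2 0 1, Run 0 1 0 1, Direct [:: 1; 0; 2], [:: Config 0 0 0 true true false; Config 0 0 0 true true false; Config 1 1 2 false false false; Config 1 2 2 true true true; Config 2 1 1 false false true; Config 2 2 1 false false true]);
  (Run 0 2 0 1, Run 0 1 0 1, Direct [:: 1; 2; 0], [:: Config 0 0 0 true true false; Config 0 0 0 true true false; Config 1 1 1 false false false; Config 1 2 1 true false true; Config 2 1 2 false false true; Config 2 2 2 false true true]);
  (Run 0 2 0 1, Run 0 1 0 1, Direct [:: 2; 0; 1], [:: Config 0 0 0 true true false; Config 0 0 0 true true false; Config 1 1 1 false false false; Config 1 2 1 true false true; Config 2 1 2 false false true; Config 2 2 2 false true true]);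
  (Run 0 2 0 1, Run 0 1 0 1, Direct [:: 2; 1; 0], [:: Config 0 0 0 true true false; Config 0 0 0 true true false; Config 1 1 2 false false false; Config 1 2 2 true true true; Config 2 1 1 false false true; Config 2 2 1 false false true]);
  (Run 0 2 0 1, Run 0 1 0 1, Run 0 1 0 1, [:: Config 0 0 0 true true true; Config 0 0 0 true true true; Config 1 1 1 false false false; Config 1 2 1 true false false; Config 2 1 2 false false false; Config 2 2 2 false true true]);
  (Run 0 2 0 1, Run 0 1 0 1, Run 0 1 0 2, [:: Config 0 0 0 true true true; Config 0 0 0 true true true; Config 1 1 1 false false false; Config 1 2 2 true false true; Config 2 1 1 false false false; Config 2 2 2 false true false]);
  (Run 0 2 0 1, Run 0 1 0 1, Run 0 1 1 0, [:: Config 0 0 2 true true false; Config 0 2 1 true false false; Config 1 0 0 true true true; Config 1 1 2 false false true; Config 2 1 1 false false false; Config 2 2 0 false true true]);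
  (Run 0 2 0 1, Run 0 1 0 1, Run 0 1 1 2, [:: Config 0 0 0 true true true; Config 0 0 2 true true false; Config 1 1 2 false false true; Config 1 2 0 true true true; Config 2 1 1 false false false; Config 2 2 1 false false false]);
  (Run 0 2 0 1, Run 0 1 0 1, Run 0 1 2 0, [:: Config 0 0 2 true true false; Config 0 2 1 true false false; Config 1 0 0 true true true; Config 1 1 1 false false false; Config 2 1 2 false false true; Config 2 2 0 false true true]);
  (Run 0 2 0 1, Run 0 1 0 1, Run 0 1 2 1, [:: Config 0 0 0 true true true; Config 0 0 2 true true false; Config 1 1 1 false false false; Config 1 2 1 true false false; Config 2 1 2 false false true; Config 2 2 0 false true true]);
  (Run 0 2 0 1, Run 0 1 0 1, Run 0 2 0 1, [:: Config 0 0 0 true true true; Config 0 0 0 true true true; Config 1 1 1 false false false; Config 1 2 2 true false false; Config 2 1 1 false false true; Config 2 2 2 false true false]);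
  (Run 0 2 0 1, Run 0 1 0 1, Run 0 2 0 2, [:: Config 0 0 0 true true true; Config 0 0 0 true true true; Config 1 1 1 false false false; Config 1 2 1 true false true; Config 2 1 2 false false false; Config 2 2 2 false true false]);
  (Run 0 2 0 1, Run 0 1 0 1, Run 0 2 1 0, [:: Config 0 0 2 true true false; Config 0 2 1 true false false; Config 1 0 0 true true true; Config 1 1 1 false false true; Config 2 1 2 false false false; Config 2 2 0 false true true]);
  (Run 0 2 0 1, Run 0 1 0 1, Run 0 2 1 2, [:: Config 0 0 0 true true true; Config 0 0 2 true true false; Config 1 1 1 false false true; Config 1 2 0 true true true; Config 2 1 1 false false false; Config 2 2 2 false false false]);
  (Run 0 2 0 1, Run 0 1 0 1, Run 0 2 2 0, [:: Config 0 0 2 true true false; Config 0 2 1 true false false; Config 1 0 0 true true true; Config 1 1 2 false false false; Config 2 1 1 false false true; Config 2 2 0 false true true]);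
  (Run 0 2 0 1, Run 0 1 0 1, Run 0 2 2 1, [:: Config 0 0 0 true true true; Config 0 0 2 true true false; Config 1 1 1 false false false; Config 1 2 2 true false false; Config 2 1 1 false false true; Config 2 2 0 false true true]);
  (Run 0 2 0 1, Run 0 1 0 1, Run 1 2 0 1, [:: Config 0 0 0 true true true; Config 0 2 1 true false true; Config 1 0 0 true true false; Config 1 1 2 false false false; Config 2 1 1 false false true; Config 2 2 2 false true false]);
  (Run 0 2 0 1, Run 0 1 0 1, Run 1 2 0 2, [:: Config 0 0 0 true true true; Config 0 2 1 true false true; Config 1 0 0 true true false; Config 1 1 1 false false true; Config 2 1 2 false false false; Config 2 2 2 false true false]);
  (Run 0 2 0 1, Run 0 1 0 1, Run 1 2 1 0, [:: Config 0 0 0 true true false; Config 0 0 2 true true false; Config 1 1 1 false false true; Config 1 2 0 true true true; Config 2 1 1 false false true; Config 2 2 2 false false false]);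
  (Run 0 2 0 1, Run 0 1 0 1, Run 1 2 1 2, [:: Config 0 0 0 true true false; Config 0 0 0 true true true; Config 1 1 1 false false true; Config 1 2 1 true false true; Config 2 1 2 false false false; Config 2 2 2 false true false]);
  (Run 0 2 0 1, Run 0 1 0 1, Run 1 2 2 0, [:: Config 0 0 0 true true false; Config 0 0 2 true true false; Config 1 1 1 false false true; Config 1 2 2 true false false; Config 2 1 1 false false true; Config 2 2 0 false true true]);
  (Run 0 2 0 1, Run 0 1 0 1, Run 1 2 2 1, [:: Config 0 0 0 true true false; Config 0 0 0 true true true; Config 1 1 2 false false false; Config 1 2 2 true true false; Config 2 1 1 false false true; Config 2 2 1 false false true]);
  (Run 0 2 0 1, Run 0 2 0 1, Direct [:: 0; 1; 2], [:: Config 0 0 2 true true false; Config 0 2 1 true false false; Config 1 0 0 true true false; Config 1 1 2 false false true; Config 2 1 0 false true true; Config 2 2 1 false false true]);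
  (Run 0 2 0 1, Run 0 2 0 1, Direct [:: 0; 2; 1], [:: Config 0 0 2 true true false; Config 0 2 1 true false false; Config 1 0 0 true true false; Config 1 1 1 false false true; Config 2 1 0 false true true; Config 2 2 2 false false true]);
  (Run 0 2 0 1, Run 0 2 0 1, Direct [:: 1; 0; 2], [:: Config 0 0 0 true true false; Config 0 0 0 true true false; Config 1 1 2 false true false; Config 1 2 2 true false true; Config 2 1 1 false false true; Config 2 2 1 false false true]);
  (Run 0 2 0 1, Run 0 2 0 1, Direct [:: 1; 2; 0], [:: Config 0 0 0 true true false; Config 0 0 0 true true false; Config 1 1 1 false false false; Config 1 2 1 true false true; Config 2 1 2 false true true; Config 2 2 2 false false true]);
  (Run 0 2 0 1, Run 0 2 0 1, Direct [:: 2; 0; 1], [:: Config 0 0 0 true true false; Config 0 0 0 true true false; Config 1 1 1 false false false; Config 1 2 1 true false true; Config 2 1 2 false true true; Config 2 2 2 false false true]);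
  (Run 0 2 0 1, Run 0 2 0 1, Direct [:: 2; 1; 0], [:: Config 0 0 0 true true false; Config 0 0 0 true true false; Config 1 1 2 false true false; Config 1 2 2 true false true; Config 2 1 1 false false true; Config 2 2 1 false false true]);
  (Run 0 2 0 1, Run 0 2 0 1, Run 0 1 0 1, [:: Config 0 0 0 true true true; Config 0 0 0 true true true; Config 1 1 1 false false false; Config 1 2 1 true false false; Config 2 1 2 false true false; Config 2 2 2 false false true]);
  (Run 0 2 0 1, Run 0 2 0 1, Run 0 1 0 2, [:: Config 0 0 0 true true true; Config 0 0 0 true true true; Config 1 1 1 false false false; Config 1 2 2 true false true; Config 2 1 2 false true false; Config 2 2 1 false false false]);
  (Run 0 2 0 1, Run 0 2 0 1, Run 0 1 1 0, [:: Config 0 0 2 true true false; Config 0 2 1 true false false; Config 1 0 0 true true true; Config 1 1 0 false true true; Config 2 1 1 false false false; Config 2 2 2 false false true]);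
  (Run 0 2 0 1, Run 0 2 0 1, Run 0 1 1 2, [:: Config 0 0 0 true true true; Config 0 0 2 true true false; Config 1 1 0 false true true; Config 1 2 2 true false true; Config 2 1 1 false false false; Config 2 2 1 false false false]);
  (Run 0 2 0 1, Run 0 2 0 1, Run 0 1 2 0, [:: Config 0 0 2 true true false; Config 0 2 1 true false false; Config 1 0 0 true true true; Config 1 1 1 false false false; Config 2 1 0 false true true; Config 2 2 2 false false true]);
  (Run 0 2 0 1, Run 0 2 0 1, Run 0 1 2 1, [:: Config 0 0 0 true true true; Config 0 0 2 true true false; Config 1 1 1 false false false; Config 1 2 1 true false false; Config 2 1 0 false true true; Config 2 2 2 false false true]);
  (Run 0 2 0 1, Run 0 2 0 1, Run 0 2 0 1, [:: Config 0 0 0 true true true; Config 0 0 0 true true true; Config 1 1 1 false false false; Config 1 2 2 true false false; Config 2 1 2 false true false; Config 2 2 1 false false true]);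
  (Run 0 2 0 1, Run 0 2 0 1, Run 0 2 0 2, [:: Config 0 0 0 true true true; Config 0 0 0 true true true; Config 1 1 1 false false false; Config 1 2 1 true false true; Config 2 1 2 false true false; Config 2 2 2 false false false]);
  (Run 0 2 0 1, Run 0 2 0 1, Run 0 2 1 0, [:: Config 0 0 2 true true false; Config 0 2 1 true false false; Config 1 0 0 true true true; Config 1 1 0 false true true; Config 2 1 1 false false true; Config 2 2 2 false false false]);
  (Run 0 2 0 1, Run 0 2 0 1, Run 0 2 1 2, [:: Config 0 0 0 true true true; Config 0 0 2 true true false; Config 1 1 0 false true true; Config 1 2 1 true false true; Config 2 1 1 false false false; Config 2 2 2 false false false]);
  (Run 0 2 0 1, Run 0 2 0 1, Run 0 2 2 0, [:: Config 0 0 2 true true false; Config 0 2 1 true false false; Config 1 0 0 true true true; Config 1 1 2 false false false; Config 2 1 0 false true true; Config 2 2 1 false false true]);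
  (Run 0 2 0 1, Run 0 2 0 1, Run 0 2 2 1, [:: Config 0 0 0 true true true; Config 0 0 2 true true false; Config 1 1 1 false false false; Config 1 2 2 true false false; Config 2 1 0 false true true; Config 2 2 1 false false true]);
  (Run 0 2 0 1, Run 0 2 0 1, Run 1 2 0 1, [:: Config 0 0 0 true true true; Config 0 2 1 true false true; Config 1 0 0 true true false; Config 1 1 2 false false false; Config 2 1 2 false true false; Config 2 2 1 false false true]);
  (Run 0 2 0 1, Run 0 2 0 1, Run 1 2 0 2, [:: Config 0 0 0 true true true; Config 0 2 1 true false true; Config 1 0 0 true true false; Config 1 1 1 false false true; Config 2 1 2 false true false; Config 2 2 2 false false false]);
  (Run 0 2 0 1, Run 0 2 0 1, Run 1 2 1 0, [:: Config 0 0 0 true true false; Config 0 0 2 true true false; Config 1 1 0 false true true; Config 1 2 1 true false true; Config 2 1 1 false false true; Config 2 2 2 false false false]);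
  (Run 0 2 0 1, Run 0 2 0 1, Run 1 2 1 2, [:: Config 0 0 0 true true false; Config 0 0 0 true true true; Config 1 1 1 false false true; Config 1 2 1 true false true; Config 2 1 2 false true false; Config 2 2 2 false false false]);
  (Run 0 2 0 1, Run 0 2 0 1, Run 1 2 2 0, [:: Config 0 0 0 true true false; Config 0 0 2 true true false; Config 1 1 0 false true true; Config 1 2 2 true false false; Config 2 1 1 false false true; Config 2 2 1 false false true]);
  (Run 0 2 0 1, Run 0 2 0 1, Run 1 2 2 1, [:: Config 0 0 0 true true false; Config 0 0 0 true true true; Config 1 1 2 false true false; Config 1 2 2 true false false; Config 2 1 1 false false true; Config 2 2 1 false false true]);
  (Run 0 2 0 1, Run 1 2 0 1, Direct [:: 0; 1; 2], [:: Config 0 0 1 true false false; Config 0 0 2 true true false; Config 1 1 0 false true false; Config 1 2 2 true false true; Config 2 1 0 false true true; Config 2 2 1 false false true]);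
  (Run 0 2 0 1, Run 1 2 0 1, Direct [:: 0; 2; 1], [:: Config 0 0 1 true false false; Config 0 0 2 true true false; Config 1 1 0 false true false; Config 1 2 1 true false true; Config 2 1 0 false true true; Config 2 2 2 false false true]);
  (Run 0 2 0 1, Run 1 2 0 1, Direct [:: 1; 0; 2], [:: Config 0 0 0 true true false; Config 0 0 2 true false false; Config 1 1 2 false true false; Config 1 2 1 true false true; Config 2 1 0 false true true; Config 2 2 1 false false true]);
  (Run 0 2 0 1, Run 1 2 0 1, Direct [:: 1; 2; 0], [:: Config 0 0 0 true true false; Config 0 0 1 true false false; Config 1 1 2 false true false; Config 1 2 1 true false true; Config 2 1 0 false true true; Config 2 2 2 false false true]);
  (Run 0 2 0 1, Run 1 2 0 1, Direct [:: 2; 0; 1], [:: Config 0 0 0 true true false; Config 0 0 2 true false false; Config 1 1 0 false true false; Config 1 2 1 true false true; Config 2 1 2 false true true; Config 2 2 1 false false true]);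
  (Run 0 2 0 1, Run 1 2 0 1, Direct [:: 2; 1; 0], [:: Config 0 0 0 true true false; Config 0 0 1 true false false; Config 1 1 0 false true false; Config 1 2 2 true false true; Config 2 1 2 false true true; Config 2 2 1 false false true]);
  (Run 0 2 0 1, Run 1 2 0 1, Run 0 1 0 1, [:: Config 0 0 0 true true true; Config 0 0 2 true false true; Config 1 1 2 false true false; Config 1 2 1 true false false; Config 2 1 0 false true true; Config 2 2 1 false false false]);
  (Run 0 2 0 1, Run 1 2 0 1, Run 0 1 0 2, [:: Config 0 0 0 true true true; Config 0 0 2 true false true; Config 1 1 0 false true true; Config 1 2 1 true false false; Config 2 1 2 false true false; Config 2 2 1 false false false]);
  (Run 0 2 0 1, Run 1 2 0 1, Run 0 1 1 0, [:: Config 0 0 1 true false false; Config 0 0 2 true true false; Config 1 1 0 false true true; Config 1 2 2 true false true; Config 2 1 0 false true true; Config 2 2 1 false false false]);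
  (Run 0 2 0 1, Run 1 2 0 1, Run 0 1 1 2, [:: Config 0 0 0 true true true; Config 0 0 1 true false false; Config 1 1 0 false true true; Config 1 2 2 true false true; Config 2 1 2 false true false; Config 2 2 1 false false false]);
  (Run 0 2 0 1, Run 1 2 0 1, Run 0 1 2 0, [:: Config 0 0 1 true false false; Config 0 0 2 true true false; Config 1 1 0 false true true; Config 1 2 1 true false false; Config 2 1 0 false true true; Config 2 2 2 false false true]);
  (Run 0 2 0 1, Run 1 2 0 1, Run 0 1 2 1, [:: Config 0 0 0 true true true; Config 0 0 1 true false false; Config 1 1 2 false true false; Config 1 2 1 true false false; Config 2 1 0 false true true; Config 2 2 2 false false true]);
  (Run 0 2 0 1, Run 1 2 0 1, Run 0 2 0 1, [:: Config 0 0 0 true true true; Config 0 0 1 true false true; Config 1 1 2 false true false; Config 1 2 1 true false false; Config 2 1 0 false true true; Config 2 2 2 false false false]);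
  (Run 0 2 0 1, Run 1 2 0 1, Run 0 2 0 2, [:: Config 0 0 0 true true true; Config 0 0 1 true false true; Config 1 1 0 false true true; Config 1 2 1 true false false; Config 2 1 2 false true false; Config 2 2 2 false false false]);
  (Run 0 2 0 1, Run 1 2 0 1, Run 0 2 1 0, [:: Config 0 0 1 true false false; Config 0 0 2 true true false; Config 1 1 0 false true true; Config 1 2 1 true false true; Config 2 1 0 false true true; Config 2 2 2 false false false]);
  (Run 0 2 0 1, Run 1 2 0 1, Run 0 2 1 2, [:: Config 0 0 0 true true true; Config 0 0 1 true false false; Config 1 1 0 false true true; Config 1 2 1 true false true; Config 2 1 2 false true false; Config 2 2 2 false false false]);
  (Run 0 2 0 1, Run 1 2 0 1, Run 0 2 2 0, [:: Config 0 0 1 true false false; Config 0 0 2 true true false; Config 1 1 0 false true true; Config 1 2 2 true false false; Config 2 1 0 false true true; Config 2 2 1 false false true]);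
  (Run 0 2 0 1, Run 1 2 0 1, Run 0 2 2 1, [:: Config 0 0 0 true true true; Config 0 0 1 true false false; Config 1 1 2 false true false; Config 1 2 2 true false false; Config 2 1 0 false true true; Config 2 2 1 false false true]);
  (Run 0 2 0 1, Run 1 2 0 1, Run 1 2 0 1, [:: Config 0 0 0 true true true; Config 0 0 1 true false true; Config 1 1 0 false true false; Config 1 2 2 true false false; Config 2 1 2 false true false; Config 2 2 1 false false true]);
  (Run 0 2 0 1, Run 1 2 0 1, Run 1 2 0 2, [:: Config 0 0 0 true true true; Config 0 0 1 true false true; Config 1 1 0 false true false; Config 1 2 1 true false true; Config 2 1 2 false true false; Config 2 2 2 false false false]);
  (Run 0 2 0 1, Run 1 2 0 1, Run 1 2 1 0, [:: Config 0 0 0 true true false; Config 0 0 2 true false false; Config 1 1 0 false true true; Config 1 2 1 true false true; Config 2 1 2 false true false; Config 2 2 1 false false true]);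
  (Run 0 2 0 1, Run 1 2 0 1, Run 1 2 1 2, [:: Config 0 0 0 true true false; Config 0 0 1 true false true; Config 1 1 0 false true true; Config 1 2 1 true false true; Config 2 1 2 false true false; Config 2 2 2 false false false]);
  (Run 0 2 0 1, Run 1 2 0 1, Run 1 2 2 0, [:: Config 0 0 0 true true false; Config 0 0 2 true false false; Config 1 1 2 false true false; Config 1 2 1 true false true; Config 2 1 0 false true true; Config 2 2 1 false false true]);
  (Run 0 2 0 1, Run 1 2 0 1, Run 1 2 2 1, [:: Config 0 0 0 true true false; Config 0 0 1 true false true; Config 1 1 2 false true false; Config 1 2 2 true false false; Config 2 1 0 false true true; Config 2 2 1 false false true]);
  (Run 1 2 0 1, Direct [:: 0; 1; 2], Direct [:: 0; 1; 2], [:: Config 0 0 1 true false false; Config 0 1 2 false false false; Config 1 0 2 true false false; Config 1 2 0 true true true; Config 2 1 0 false true true; Config 2 2 1 false true true]);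
  (Run 1 2 0 1, Direct [:: 0; 1; 2], Direct [:: 0; 2; 1], [:: Config 0 0 1 true false false; Config 0 1 2 false false false; Config 1 0 1 true false false; Config 1 2 0 true true true; Config 2 1 2 false true true; Config 2 2 0 false true true]);
  (Run 1 2 0 1, Direct [:: 0; 1; 2], Direct [:: 1; 0; 2], [:: Config 0 0 2 true false false; Config 0 1 0 false false false; Config 1 0 2 true false false; Config 1 2 1 true true true; Config 2 1 0 false true true; Config 2 2 1 false true true]);
  (Run 1 2 0 1, Direct [:: 0; 1; 2], Direct [:: 1; 2; 0], [:: Config 0 0 1 true false false; Config 0 1 0 false false false; Config 1 0 2 true false false; Config 1 2 1 true true true; Config 2 1 2 false true true; Config 2 2 0 false true true]);
  (Run 1 2 0 1, Direct [:: 0; 1; 2], Direct [:: 2; 0; 1], [:: Config 0 0 2 true false false; Config 0 1 0 false false false; Config 1 0 1 true false false; Config 1 2 0 true true true; Config 2 1 2 false true true; Config 2 2 1 false true true]);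
  (Run 1 2 0 1, Direct [:: 0; 1; 2], Direct [:: 2; 1; 0], [:: Config 0 0 1 true false false; Config 0 1 0 false false false; Config 1 0 2 true false false; Config 1 2 0 true true true; Config 2 1 2 false true true; Config 2 2 1 false true true]);
  (Run 1 2 0 1, Direct [:: 0; 1; 2], Run 0 1 0 1, [:: Config 0 0 2 true false true; Config 0 1 0 false false true; Config 1 0 1 true false false; Config 1 2 1 true true false; Config 2 1 2 false true false; Config 2 2 0 false true true]);
  (Run 1 2 0 1, Direct [:: 0; 1; 2], Run 0 1 0 2, [:: Config 0 0 2 true false true; Config 0 1 0 false false true; Config 1 0 1 true false false; Config 1 2 0 true true true; Config 2 1 2 false true false; Config 2 2 1 false true false]);
  (Run 1 2 0 1, Direct [:: 0; 1; 2], Run 0 1 1 0, [:: Config 0 0 1 true false false; Config 0 1 2 false false false; Config 1 0 2 true false true; Config 1 2 0 true true true; Config 2 1 0 false true true; Config 2 2 1 false true false]);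
  (Run 1 2 0 1, Direct [:: 0; 1; 2], Run 0 1 1 2, [:: Config 0 0 1 true false false; Config 0 1 0 false false true; Config 1 0 2 true false true; Config 1 2 0 true true true; Config 2 1 2 false true false; Config 2 2 1 false true false]);
  (Run 1 2 0 1, Direct [:: 0; 1; 2], Run 0 1 2 0, [:: Config 0 0 1 true false false; Config 0 1 2 false false false; Config 1 0 1 true false false; Config 1 2 0 true true true; Config 2 1 2 false true true; Config 2 2 0 false true true]);
  (Run 1 2 0 1, Direct [:: 0; 1; 2], Run 0 1 2 1, [:: Config 0 0 1 true false false; Config 0 1 0 false false true; Config 1 0 2 true false false; Config 1 2 1 true true false; Config 2 1 2 false true true; Config 2 2 0 false true true]);
  (Run 1 2 0 1, Direct [:: 0; 1; 2], Run 0 2 0 1, [:: Config 0 0 1 true false true; Config 0 1 0 false false true; Config 1 0 2 true false false; Config 1 2 1 true true false; Config 2 1 2 false true false; Config 2 2 0 false true true]);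
  (Run 1 2 0 1, Direct [:: 0; 1; 2], Run 0 2 0 2, [:: Config 0 0 1 true false true; Config 0 1 0 false false true; Config 1 0 2 true false false; Config 1 2 0 true true true; Config 2 1 2 false true false; Config 2 2 1 false true false]);
  (Run 1 2 0 1, Direct [:: 0; 1; 2], Run 0 2 1 0, [:: Config 0 0 1 true false false; Config 0 1 2 false false false; Config 1 0 1 true false true; Config 1 2 0 true true true; Config 2 1 2 false true false; Config 2 2 0 false true true]);
  (Run 1 2 0 1, Direct [:: 0; 1; 2], Run 0 2 1 2, [:: Config 0 0 1 true false false; Config 0 2 0 false false true; Config 1 0 1 true false true; Config 1 2 0 true true true; Config 2 1 2 false true false; Config 2 1 2 false true false]);
  (Run 1 2 0 1, Direct [:: 0; 1; 2], Run 0 2 2 0, [:: Config 0 0 1 true false false; Config 0 1 2 false false false; Config 1 0 2 true false false; Config 1 2 0 true true true; Config 2 1 0 false true true; Config 2 2 1 false true true]);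
  (Run 1 2 0 1, Direct [:: 0; 1; 2], Run 0 2 2 1, [:: Config 0 0 1 true false true; Config 0 1 2 false false false; Config 1 0 2 true false false; Config 1 2 1 true true false; Config 2 1 0 false true true; Config 2 2 0 false true true]);
  (Run 1 2 0 1, Direct [:: 0; 1; 2], Run 1 2 0 1, [:: Config 0 0 1 true false true; Config 0 1 0 false false true; Config 1 0 2 true false false; Config 1 2 0 true true false; Config 2 1 2 false true false; Config 2 2 1 false true true]);
  (Run 1 2 0 1, Direct [:: 0; 1; 2], Run 1 2 0 2, [:: Config 0 0 1 true false true; Config 0 1 0 false false true; Config 1 0 2 true false false; Config 1 2 1 true true true; Config 2 1 2 false true false; Config 2 2 0 false true false]);
  (Run 1 2 0 1, Direct [:: 0; 1; 2], Run 1 2 1 0, [:: Config 0 0 2 true false false; Config 0 1 0 false false false; Config 1 0 1 true false true; Config 1 2 0 true true true; Config 2 1 2 false true false; Config 2 2 1 false true true]);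
  (Run 1 2 0 1, Direct [:: 0; 1; 2], Run 1 2 1 2, [:: Config 0 0 1 true false true; Config 0 1 2 false false false; Config 1 0 1 true false true; Config 1 2 0 true true true; Config 2 1 2 false true false; Config 2 2 0 false true false]);
  (Run 1 2 0 1, Direct [:: 0; 1; 2], Run 1 2 2 0, [:: Config 0 0 2 true false false; Config 0 1 0 false false false; Config 1 0 2 true false false; Config 1 2 1 true true true; Config 2 1 0 false true true; Config 2 2 1 false true true]);
  (Run 1 2 0 1, Direct [:: 0; 1; 2], Run 1 2 2 1, [:: Config 0 0 1 true false true; Config 0 1 2 false false false; Config 1 0 2 true false false; Config 1 2 0 true true false; Config 2 1 0 false true true; Config 2 2 1 false true true]);
  (Run 1 2 0 1, Run 0 1 0 1, Direct [:: 0; 1; 2], [:: Config 0 0 2 true true false; Config 0 1 1 false false false; Config 1 0 0 true true false; Config 1 2 2 true false true; Config 2 1 1 false false true; Config 2 2 0 false true true]);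
  (Run 1 2 0 1, Run 0 1 0 1, Direct [:: 0; 2; 1], [:: Config 0 0 2 true true false; Config 0 1 1 false false false; Config 1 0 0 true true false; Config 1 2 1 true false true; Config 2 1 2 false false true; Config 2 2 0 false true true]);
  (Run 1 2 0 1, Run 0 1 0 1, Direct [:: 1; 0; 2], [:: Config 0 0 0 true true false; Config 0 1 2 false false false; Config 1 0 2 true true false; Config 1 2 1 true false true; Config 2 1 1 false false true; Config 2 2 0 false true true]);
  (Run 1 2 0 1, Run 0 1 0 1, Direct [:: 1; 2; 0], [:: Config 0 0 0 true true false; Config 0 1 1 false false false; Config 1 0 2 true true false; Config 1 2 1 true false true; Config 2 1 2 false false true; Config 2 2 0 false true true]);
  (Run 1 2 0 1, Run 0 1 0 1, Direct [:: 2; 0; 1], [:: Config 0 0 0 true true false; Config 0 1 2 false false false; Config 1 0 0 true true false; Config 1 2 1 true false true; Config 2 1 1 false false true; Config 2 2 2 false true true]);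
  (Run 1 2 0 1, Run 0 1 0 1, Direct [:: 2; 1; 0], [:: Config 0 0 0 true true false; Config 0 1 1 false false false; Config 1 0 0 true true false; Config 1 2 2 true false true; Config 2 1 1 false false true; Config 2 2 2 false true true]);
  (Run 1 2 0 1, Run 0 1 0 1, Run 0 1 0 1, [:: Config 0 0 0 true true true; Config 0 1 2 false false true; Config 1 0 2 true true false; Config 1 2 1 true false false; Config 2 1 1 false false false; Config 2 2 0 false true true]);
  (Run 1 2 0 1, Run 0 1 0 1, Run 0 1 0 2, [:: Config 0 0 0 true true true; Config 0 1 2 false false true; Config 1 0 0 true true true; Config 1 2 1 true false false; Config 2 1 1 false false false; Config 2 2 2 false true false]);
  (Run 1 2 0 1, Run 0 1 0 1, Run 0 1 1 0, [:: Config 0 0 2 true true false; Config 0 1 1 false false false; Config 1 0 0 true true true; Config 1 2 0 true true true; Config 2 1 1 false false false; Config 2 2 2 false false true]);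
  (Run 1 2 0 1, Run 0 1 0 1, Run 0 1 1 2, [:: Config 0 0 0 true true true; Config 0 1 1 false false false; Config 1 0 0 true true true; Config 1 2 2 true false true; Config 2 1 1 false false false; Config 2 2 2 false true false]);
  (Run 1 2 0 1, Run 0 1 0 1, Run 0 1 2 0, [:: Config 0 0 2 true true false; Config 0 1 1 false false false; Config 1 0 0 true true true; Config 1 2 1 true false false; Config 2 1 2 false false true; Config 2 2 0 false true true]);
  (Run 1 2 0 1, Run 0 1 0 1, Run 0 1 2 1, [:: Config 0 0 0 true true true; Config 0 1 1 false false false; Config 1 0 2 true true false; Config 1 2 1 true false false; Config 2 1 2 false false true; Config 2 2 0 false true true]);
  (Run 1 2 0 1, Run 0 1 0 1, Run 0 2 0 1, [:: Config 0 0 0 true true true; Config 0 1 1 false false true; Config 1 0 2 true true false; Config 1 2 1 true false false; Config 2 1 2 false false false; Config 2 2 0 false true true]);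
  (Run 1 2 0 1, Run 0 1 0 1, Run 0 2 0 2, [:: Config 0 0 0 true true true; Config 0 1 1 false false true; Config 1 0 0 true true true; Config 1 2 1 true false false; Config 2 1 2 false false false; Config 2 2 2 false true false]);
  (Run 1 2 0 1, Run 0 1 0 1, Run 0 2 1 0, [:: Config 0 0 2 true true false; Config 0 1 1 false false false; Config 1 0 0 true true true; Config 1 2 0 true true true; Config 2 1 1 false false true; Config 2 2 2 false false false]);
  (Run 1 2 0 1, Run 0 1 0 1, Run 0 2 1 2, [:: Config 0 0 0 true true true; Config 0 1 1 false false false; Config 1 0 0 true true true; Config 1 2 1 true false true; Config 2 1 2 false false false; Config 2 2 2 false true false]);
  (Run 1 2 0 1, Run 0 1 0 1, Run 0 2 2 0, [:: Config 0 0 2 true true false; Config 0 1 1 false false false; Config 1 0 0 true true true; Config 1 2 2 true false false; Config 2 1 1 false false true; Config 2 2 0 false true true]);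
  (Run 1 2 0 1, Run 0 1 0 1, Run 0 2 2 1, [:: Config 0 0 0 true true true; Config 0 1 1 false false false; Config 1 0 2 true true false; Config 1 2 2 true false false; Config 2 1 1 false false true; Config 2 2 0 false true true]);
  (Run 1 2 0 1, Run 0 1 0 1, Run 1 2 0 1, [:: Config 0 0 0 true true true; Config 0 1 1 false false true; Config 1 0 0 true true false; Config 1 2 2 true false false; Config 2 1 1 false false true; Config 2 2 2 false true false]);
  (Run 1 2 0 1, Run 0 1 0 1, Run 1 2 0 2, [:: Config 0 0 0 true true true; Config 0 1 1 false false true; Config 1 0 0 true true false; Config 1 2 1 true false true; Config 2 1 2 false false false; Config 2 2 2 false true false]);
  (Run 1 2 0 1, Run 0 1 0 1, Run 1 2 1 0, [:: Config 0 0 0 true true false; Config 0 1 2 false false false; Config 1 0 0 true true true; Config 1 2 1 true false true; Config 2 1 1 false false true; Config 2 2 2 false true false]);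
  (Run 1 2 0 1, Run 0 1 0 1, Run 1 2 1 2, [:: Config 0 0 0 true true false; Config 0 1 1 false false true; Config 1 0 0 true true true; Config 1 2 1 true false true; Config 2 1 2 false false false; Config 2 2 2 false true false]);
  (Run 1 2 0 1, Run 0 1 0 1, Run 1 2 2 0, [:: Config 0 0 0 true true false; Config 0 1 2 false false false; Config 1 0 0 true true true; Config 1 2 2 true true false; Config 2 1 1 false false true; Config 2 2 1 false false true]);
  (Run 1 2 0 1, Run 0 1 0 1, Run 1 2 2 1, [:: Config 0 0 0 true true false; Config 0 1 1 false false true; Config 1 0 2 true true false; Config 1 2 2 true false false; Config 2 1 1 false false true; Config 2 2 0 false true true]);
  (Run 1 2 0 1, Run 0 2 0 1, Direct [:: 0; 1; 2], [:: Config 0 0 2 true true false; Config 0 1 1 false false false; Config 1 0 0 true true false; Config 1 2 2 true false true; Config 2 1 0 false true true; Config 2 2 1 false false true]);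
  (Run 1 2 0 1, Run 0 2 0 1, Direct [:: 0; 2; 1], [:: Config 0 0 2 true true false; Config 0 1 1 false false false; Config 1 0 0 true true false; Config 1 2 1 true false true; Config 2 1 0 false true true; Config 2 2 2 false false true]);
  (Run 1 2 0 1, Run 0 2 0 1, Direct [:: 1; 0; 2], [:: Config 0 0 0 true true false; Config 0 1 0 false true false; Config 1 0 2 true true false; Config 1 2 2 true false true; Config 2 1 1 false false true; Config 2 2 1 false false true]);
  (Run 1 2 0 1, Run 0 2 0 1, Direct [:: 1; 2; 0], [:: Config 0 0 0 true true false; Config 0 1 1 false false false; Config 1 0 2 true true false; Config 1 2 1 true false true; Config 2 1 0 false true true; Config 2 2 2 false false true]);
  (Run 1 2 0 1, Run 0 2 0 1, Direct [:: 2; 0; 1], [:: Config 0 0 0 true true false; Config 0 1 2 false false false; Config 1 0 0 true true false; Config 1 2 1 true false true; Config 2 1 2 false true true; Config 2 2 1 false false true]);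
  (Run 1 2 0 1, Run 0 2 0 1, Direct [:: 2; 1; 0], [:: Config 0 0 0 true true false; Config 0 1 0 false true false; Config 1 0 2 true true false; Config 1 2 2 true false true; Config 2 1 1 false false true; Config 2 2 1 false false true]);
  (Run 1 2 0 1, Run 0 2 0 1, Run 0 1 0 1, [:: Config 0 0 0 true true true; Config 0 1 0 false true true; Config 1 0 2 true true false; Config 1 2 1 true false false; Config 2 1 1 false false false; Config 2 2 2 false false true]);
  (Run 1 2 0 1, Run 0 2 0 1, Run 0 1 0 2, [:: Config 0 0 0 true true true; Config 0 1 0 false true true; Config 1 0 2 true true false; Config 1 2 2 true false true; Config 2 1 1 false false false; Config 2 2 1 false false false]);
  (Run 1 2 0 1, Run 0 2 0 1, Run 0 1 1 0, [:: Config 0 0 2 true true false; Config 0 1 1 false false false; Config 1 0 0 true true true; Config 1 2 2 true false true; Config 2 1 0 false true true; Config 2 2 1 false false false]);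
  (Run 1 2 0 1, Run 0 2 0 1, Run 0 1 1 2, [:: Config 0 0 0 true true true; Config 0 1 1 false false false; Config 1 0 0 true true true; Config 1 2 2 true false true; Config 2 1 2 false true false; Config 2 2 1 false false false]);
  (Run 1 2 0 1, Run 0 2 0 1, Run 0 1 2 0, [:: Config 0 0 2 true true false; Config 0 1 1 false false false; Config 1 0 0 true true true; Config 1 2 1 true false false; Config 2 1 0 false true true; Config 2 2 2 false false true]);
  (Run 1 2 0 1, Run 0 2 0 1, Run 0 1 2 1, [:: Config 0 0 0 true true true; Config 0 1 1 false false false; Config 1 0 2 true true false; Config 1 2 1 true false false; Config 2 1 0 false true true; Config 2 2 2 false false true]);
  (Run 1 2 0 1, Run 0 2 0 1, Run 0 2 0 1, [:: Config 0 0 0 true true true; Config 0 1 0 false true true; Config 1 0 2 true true false; Config 1 2 1 true false false; Config 2 1 1 false false true; Config 2 2 2 false false false]);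
  (Run 1 2 0 1, Run 0 2 0 1, Run 0 2 0 2, [:: Config 0 0 0 true true true; Config 0 1 0 false true true; Config 1 0 2 true true false; Config 1 2 1 true false true; Config 2 1 1 false false false; Config 2 2 2 false false false]);
  (Run 1 2 0 1, Run 0 2 0 1, Run 0 2 1 0, [:: Config 0 0 2 true true false; Config 0 1 1 false false false; Config 1 0 0 true true true; Config 1 2 1 true false true; Config 2 1 0 false true true; Config 2 2 2 false false false]);
  (Run 1 2 0 1, Run 0 2 0 1, Run 0 2 1 2, [:: Config 0 0 0 true true true; Config 0 1 1 false false false; Config 1 0 0 true true true; Config 1 2 1 true false true; Config 2 1 2 false true false; Config 2 2 2 false false false]);
  (Run 1 2 0 1, Run 0 2 0 1, Run 0 2 2 0, [:: Config 0 0 2 true true false; Config 0 1 1 false false false; Config 1 0 0 true true true; Config 1 2 2 true false false; Config 2 1 0 false true true; Config 2 2 1 false false true]);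
  (Run 1 2 0 1, Run 0 2 0 1, Run 0 2 2 1, [:: Config 0 0 0 true true true; Config 0 1 1 false false false; Config 1 0 2 true true false; Config 1 2 2 true false false; Config 2 1 0 false true true; Config 2 2 1 false false true]);
  (Run 1 2 0 1, Run 0 2 0 1, Run 1 2 0 1, [:: Config 0 0 0 true true true; Config 0 1 1 false false true; Config 1 0 0 true true false; Config 1 2 2 true false false; Config 2 1 2 false true false; Config 2 2 1 false false true]);
  (Run 1 2 0 1, Run 0 2 0 1, Run 1 2 0 2, [:: Config 0 0 0 true true true; Config 0 1 1 false false true; Config 1 0 0 true true false; Config 1 2 1 true false true; Config 2 1 2 false true false; Config 2 2 2 false false false]);
  (Run 1 2 0 1, Run 0 2 0 1, Run 1 2 1 0, [:: Config 0 0 0 true true false; Config 0 1 2 false false false; Config 1 0 0 true true true; Config 1 2 1 true false true; Config 2 1 2 false true false; Config 2 2 1 false false true]);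
  (Run 1 2 0 1, Run 0 2 0 1, Run 1 2 1 2, [:: Config 0 0 0 true true false; Config 0 1 1 false false true; Config 1 0 0 true true true; Config 1 2 1 true false true; Config 2 1 2 false true false; Config 2 2 2 false false false]);
  (Run 1 2 0 1, Run 0 2 0 1, Run 1 2 2 0, [:: Config 0 0 0 true true false; Config 0 1 2 false false false; Config 1 0 2 true true false; Config 1 2 1 true false true; Config 2 1 0 false true true; Config 2 2 1 false false true]);
  (Run 1 2 0 1, Run 0 2 0 1, Run 1 2 2 1, [:: Config 0 0 0 true true false; Config 0 1 0 false true true; Config 1 0 2 true true false; Config 1 2 2 true false false; Config 2 1 1 false false true; Config 2 2 1 false false true]);
  (Run 1 2 0 1, Run 1 2 0 1, Direct [:: 0; 1; 2], [:: Config 0 0 1 true false false; Config 0 1 2 false true false; Config 1 0 0 true true false; Config 1 2 2 true false true; Config 2 1 0 false true true; Config 2 2 1 false false true]);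
  (Run 1 2 0 1, Run 1 2 0 1, Direct [:: 0; 2; 1], [:: Config 0 0 1 true false false; Config 0 1 2 false true false; Config 1 0 0 true true false; Config 1 2 1 true false true; Config 2 1 0 false true true; Config 2 2 2 false false true]);
  (Run 1 2 0 1, Run 1 2 0 1, Direct [:: 1; 0; 2], [:: Config 0 0 0 true true false; Config 0 1 2 false true false; Config 1 0 1 true false false; Config 1 2 2 true false true; Config 2 1 0 false true true; Config 2 2 1 false false true]);
  (Run 1 2 0 1, Run 1 2 0 1, Direct [:: 1; 2; 0], [:: Config 0 0 0 true true false; Config 0 1 0 false true false; Config 1 0 1 true false false; Config 1 2 1 true false true; Config 2 1 2 false true true; Config 2 2 2 false false true]);
  (Run 1 2 0 1, Run 1 2 0 1, Direct [:: 2; 0; 1], [:: Config 0 0 0 true true false; Config 0 1 0 false true false; Config 1 0 1 true false false; Config 1 2 1 true false true; Config 2 1 2 false true true; Config 2 2 2 false false true]);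
  (Run 1 2 0 1, Run 1 2 0 1, Direct [:: 2; 1; 0], [:: Config 0 0 1 true false false; Config 0 1 0 false true false; Config 1 0 0 true true false; Config 1 2 2 true false true; Config 2 1 2 false true true; Config 2 2 1 false false true]);
  (Run 1 2 0 1, Run 1 2 0 1, Run 0 1 0 1, [:: Config 0 0 0 true true true; Config 0 1 0 false true true; Config 1 0 1 true false false; Config 1 2 1 true false false; Config 2 1 2 false true false; Config 2 2 2 false false true]);
  (Run 1 2 0 1, Run 1 2 0 1, Run 0 1 0 2, [:: Config 0 0 0 true true true; Config 0 1 0 false true true; Config 1 0 1 true false false; Config 1 2 2 true false true; Config 2 1 2 false true false; Config 2 2 1 false false false]);
  (Run 1 2 0 1, Run 1 2 0 1, Run 0 1 1 0, [:: Config 0 0 1 true false false; Config 0 1 2 false true false; Config 1 0 0 true true true; Config 1 2 2 true false true; Config 2 1 0 false true true; Config 2 2 1 false false false]);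
  (Run 1 2 0 1, Run 1 2 0 1, Run 0 1 1 2, [:: Config 0 0 1 true false false; Config 0 1 0 false true true; Config 1 0 0 true true true; Config 1 2 2 true false true; Config 2 1 2 false true false; Config 2 2 1 false false false]);
  (Run 1 2 0 1, Run 1 2 0 1, Run 0 1 2 0, [:: Config 0 0 1 true false false; Config 0 1 2 false true false; Config 1 0 0 true true true; Config 1 2 1 true false false; Config 2 1 0 false true true; Config 2 2 2 false false true]);
  (Run 1 2 0 1, Run 1 2 0 1, Run 0 1 2 1, [:: Config 0 0 0 true true true; Config 0 1 2 false true false; Config 1 0 1 true false false; Config 1 2 1 true false false; Config 2 1 0 false true true; Config 2 2 2 false false true]);
  (Run 1 2 0 1, Run 1 2 0 1, Run 0 2 0 1, [:: Config 0 0 0 true true true; Config 0 1 0 false true true; Config 1 0 1 true false false; Config 1 2 2 true false false; Config 2 1 2 false true false; Config 2 2 1 false false true]);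
  (Run 1 2 0 1, Run 1 2 0 1, Run 0 2 0 2, [:: Config 0 0 0 true true true; Config 0 1 0 false true true; Config 1 0 1 true false false; Config 1 2 1 true false true; Config 2 1 2 false true false; Config 2 2 2 false false false]);
  (Run 1 2 0 1, Run 1 2 0 1, Run 0 2 1 0, [:: Config 0 0 1 true false false; Config 0 1 2 false true false; Config 1 0 0 true true true; Config 1 2 1 true false true; Config 2 1 0 false true true; Config 2 2 2 false false false]);
  (Run 1 2 0 1, Run 1 2 0 1, Run 0 2 1 2, [:: Config 0 0 1 true false false; Config 0 1 0 false true true; Config 1 0 0 true true true; Config 1 2 1 true false true; Config 2 1 2 false true false; Config 2 2 2 false false false]);
  (Run 1 2 0 1, Run 1 2 0 1, Run 0 2 2 0, [:: Config 0 0 1 true false false; Config 0 1 2 false true false; Config 1 0 0 true true true; Config 1 2 2 true false false; Config 2 1 0 false true true; Config 2 2 1 false false true]);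
  (Run 1 2 0 1, Run 1 2 0 1, Run 0 2 2 1, [:: Config 0 0 0 true true true; Config 0 1 2 false true false; Config 1 0 1 true false false; Config 1 2 2 true false false; Config 2 1 0 false true true; Config 2 2 1 false false true]);
  (Run 1 2 0 1, Run 1 2 0 1, Run 1 2 0 1, [:: Config 0 0 1 true false true; Config 0 1 0 false true true; Config 1 0 0 true true false; Config 1 2 2 true false false; Config 2 1 2 false true false; Config 2 2 1 false false true]);
  (Run 1 2 0 1, Run 1 2 0 1, Run 1 2 0 2, [:: Config 0 0 0 true true true; Config 0 2 1 false false true; Config 1 0 1 true false true; Config 1 2 2 true false false; Config 2 1 0 false true false; Config 2 1 2 false true false]);
  (Run 1 2 0 1, Run 1 2 0 1, Run 1 2 1 0, [:: Config 0 0 0 true true false; Config 0 1 2 false true false; Config 1 0 1 true false true; Config 1 2 1 true false true; Config 2 1 0 false true true; Config 2 2 2 false false false]);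
  (Run 1 2 0 1, Run 1 2 0 1, Run 1 2 1 2, [:: Config 0 0 0 true true false; Config 0 1 0 false true true; Config 1 0 1 true false true; Config 1 2 1 true false true; Config 2 1 2 false true false; Config 2 2 2 false false false]);
  (Run 1 2 0 1, Run 1 2 0 1, Run 1 2 2 0, [:: Config 0 0 0 true true false; Config 0 1 2 false true false; Config 1 0 1 true false true; Config 1 2 2 true false false; Config 2 1 0 false true true; Config 2 2 1 false false true]);
  (Run 1 2 0 1, Run 1 2 0 1, Run 1 2 2 1, [:: Config 0 0 1 true false true; Config 0 1 0 false true false; Config 1 0 2 true true false; Config 1 2 2 true false false; Config 2 1 0 false true true; Config 2 2 1 false false true])].

Definition perm_inv (p : seq nat) : seq nat := [:: index 0 p; index 1 p; index 2 p].
Definition perm_comp (f g : seq nat) : seq nat := [seq nth 0 f (nth 0 g i) | i <- [:: 0; 1; 2]].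
Definition perm_front (u v : nat) : seq nat :=
  [seq (if i == u then 0 else if i == v then 1 else 2) | i <- [:: 0; 1; 2]].

(* Label [i] becomes [nth 0 sX i] at the start and [nth 0 sY i] at the end
   of [k], and the bit is flipped when [t]. *)
Definition relabel_link (k : link) (sX sY : seq nat) (t : bool) : link :=
  match k with
  | Direct p => Direct (perm_comp sY (perm_comp p (perm_inv sX)))
  | Run a0 a1 b0 b1 =>
      let a s := if s then a1 else a0 in
      let b s := if s then b1 else b0 in
      Run (nth 0 sX (a t)) (nth 0 sX (a (~~ t))) (nth 0 sY (b t)) (nth 0 sY (b (~~ t)))
  end.

(* The relabelling of the end of [k] and the bit flip that normalize [k],
   given the relabelling [sX] of its start. *)
Definition normalizer (k : link) (sX : seq nat) : seq nat * bool :=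
  match k with
  | Direct p => (perm_comp sX (perm_inv p), false)
  | Run a0 a1 b0 b1 =>
      let t := nth 0 sX a1 < nth 0 sX a0 in
      (perm_front (if t then b1 else b0) (if t then b0 else b1), t)
  end.

Definition closing_flip (k : link) (sX : seq nat) : bool :=
  if k is Run a0 a1 _ _ then nth 0 sX a1 < nth 0 sX a0 else false.

Fixpoint table_lookup (c1 c2 c3 : link) (tbl : seq (link * link * link * seq config)) :=
  if tbl is (k1, k2, k3, W) :: tbl' then
    if [&& link_eqb k1 c1, link_eqb k2 c2 & link_eqb k3 c3] then W
    else table_lookup c1 c2 c3 tbl'
  else [::].

(* Normalize the triple, look its witness up and transport it back.  Nothing
   about this transport is proved: [all_witnesses_ok] checks the outcome. *)
Definition witness (c1 c2 c3 : link) : seq config :=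
  let id3 := [:: 0; 1; 2] in
  let (sB, t1) := normalizer c1 id3 in
  let (sC, t2) := normalizer c2 sB in
  let t3 := closing_flip c3 sC in
  [seq Config (lab0 w) (nth 0 (perm_inv sB) (labq w)) (nth 0 (perm_inv sC) (labr w))
              (bit1 w (+) t1) (bit2 w (+) t2) (bit3 w (+) t3)
  | w <- table_lookup (relabel_link c1 id3 sB t1) (relabel_link c2 sB sC t2)
                      (relabel_link c3 sC id3 t3) witness_table].

Definition balanced (f : config -> nat) (W : seq config) : bool :=
  all (fun i => count (fun w => f w == i) W == 2) labels.

(* The uniform distribution on six configurations allowed by the three links
   under which every label has probability 1/3 and every bit 1/2. *)
Definition witness_ok (c1 c2 c3 : link) (W : seq config) : bool :=
  [&& size W == 6,
      all (fun w => [&& lab0 w < 3, labq w < 3, labr w < 3,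
                        link_allows c1 (lab0 w) (bit1 w) (labq w),
                        link_allows c2 (labq w) (bit2 w) (labr w) &
                        link_allows c3 (labr w) (bit3 w) (lab0 w)]) W,
      [&& balanced lab0 W, balanced labq W & balanced labr W] &
      [&& count bit1 W == 3, count bit2 W == 3 & count bit3 W == 3]].

Definition all_witnesses_ok : bool :=
  all (fun c1 => all (fun c2 => all (fun c3 =>
    witness_ok c1 c2 c3 (witness c1 c2 c3)) links) links) links.

Lemma check_all_witnesses : all_witnesses_ok.
Proof. by vm_compute. Qed.

Lemma witness_correct c1 c2 c3 : c1 \in links -> c2 \in links -> c3 \in links ->
  witness_ok c1 c2 c3 (witness c1 c2 c3).
Proof.
by move=> h1 h2 h3; move: check_all_witnesses => /allP/(_ _ h1)/allP/(_ _ h2)/allP/(_ _ h3).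
Qed.

(** * Links avoiding partial matchings *)

Section PartialMatching.
Variables (A B : eqType) (X : seq A) (Y : seq B).

Definition partial_matching (r : A -> B -> bool) : bool :=
  all (fun x => all (fun y => all (fun y' => r x y && r x y' ==> (y == y')) Y) Y) X &&
  all (fun y => all (fun x => all (fun x' => r x y && r x' y ==> (x == x')) X) X) Y.

Lemma partial_matchingW (r : A -> B -> bool) :
  (forall x y y', x \in X -> y \in Y -> y' \in Y -> r x y -> r x y' -> y = y') ->
  (forall x x' y, x \in X -> x' \in X -> y \in Y -> r x y -> r x' y -> x = x') ->
  partial_matching r.
Proof.
move=> injl injr; apply/andP; split; apply/allP=> u hu; apply/allP=> v hv;
  apply/allP=> v' hv'; apply/implyP=> /andP[h h']; apply/eqP.
- exact: injl h h'.
- exact: injr h h'.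
Qed.

Lemma eq_partial_matching (r r' : A -> B -> bool) :
  {in X & Y, r =2 r'} -> partial_matching r = partial_matching r'.
Proof.
move=> e; congr andb; apply: eq_in_all=> u hu; apply: eq_in_all=> v hv;
  apply: eq_in_all=> v' hv'; by rewrite !e.
Qed.

Fixpoint bit_lists (m : nat) : seq (seq bool) :=
  if m is m'.+1 then [seq b :: l | b <- bools, l <- bit_lists m'] else [:: [::]].

Lemma mem_bit_lists m l : size l = m -> l \in bit_lists m.
Proof.
elim: m l => [|m IH] [|b l] //= [/IH hl].
exact: (allpairs_f (fun b l => b :: l) (mem_bools b) hl).
Qed.

Definition rel_of_bits (l : seq bool) (x : A) (y : B) : bool :=
  nth false l (index x X * size Y + index y Y).

Lemma rel_of_bitsP (r : A -> B -> bool) :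
  exists2 l, l \in bit_lists (size X * size Y) & {in X & Y, rel_of_bits l =2 r}.
Proof.
exists [seq r x y | x <- X, y <- Y]; first by rewrite mem_bit_lists ?size_allpairs.
rewrite /rel_of_bits => x y hx hy; elim: X x hx => [//|a X' IH] x /=.
rewrite nth_cat size_map; case: (a =P x) => [<- _|/eqP ax].
  by rewrite mul0n add0n index_mem hy (nth_map y) ?index_mem // nth_index.
rewrite inE eq_sym (negbTE ax) /= => hx.
by rewrite mulSn -addnA ltnNge leq_addr /= addKn IH.
Qed.

End PartialMatching.

Definition avoids_direct (k : link) (M : nat -> nat -> bool) : bool :=
  all (fun x => all (fun s => all (fun y =>
    link_allows k x s y ==> ~~ M x y) labels) bools) labels.

Definition avoids_run (k : link) (P : nat -> bool -> bool) (Q : bool -> nat -> bool) : bool :=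
  all (fun x => all (fun s => all (fun y =>
    link_allows k x s y ==> ~~ P x s && ~~ Q s y) labels) bools) labels.

Definition direct_links_suffice : bool :=
  all (fun l => let M := rel_of_bits labels labels l in
         partial_matching labels labels M ==> has (avoids_direct^~ M) links)
    (bit_lists 9).

Definition run_links_suffice : bool :=
  all (fun lp => all (fun lq =>
         let P := rel_of_bits labels bools lp in let Q := rel_of_bits bools labels lq in
         partial_matching labels bools P && partial_matching bools labels Q ==>
         has (fun k => avoids_run k P Q) links)
    (bit_lists 6)) (bit_lists 6).

Lemma check_direct_links : direct_links_suffice. Proof. by vm_compute. Qed.
Lemma check_run_links : run_links_suffice. Proof. by vm_compute. Qed.

Lemma direct_link_exists (M : nat -> nat -> bool) :
  partial_matching labels labels M ->
  exists2 k, k \in links & forall x s y, x < 3 -> y < 3 -> link_allows k x s y -> ~~ M x y.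
Proof.
have [l hl eM] := rel_of_bitsP labels labels M.
rewrite -(eq_partial_matching eM) => pM.
have /hasP[k hk /allP avk] := implyP (allP check_direct_links l hl) pM.
exists k => // x s y hx hy hxy; rewrite -eM ?mem_labels //.
move: hx hy; rewrite -!mem_labels => hx hy.
by have /allP/(_ s (mem_bools s))/allP/(_ y hy)/implyP := avk x hx; apply.
Qed.

Lemma run_link_exists (P : nat -> bool -> bool) (Q : bool -> nat -> bool) :
  partial_matching labels bools P -> partial_matching bools labels Q ->
  exists2 k, k \in links & forall x s y, x < 3 -> y < 3 -> link_allows k x s y ->
    ~~ P x s && ~~ Q s y.
Proof.
have [lp hlp eP] := rel_of_bitsP labels bools P.
have [lq hlq eQ] := rel_of_bitsP bools labels Q.
rewrite -(eq_partial_matching eP) -(eq_partial_matching eQ) => pP pQ.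
have := implyP (allP (allP check_run_links lp hlp) lq hlq) (introT andP (conj pP pQ)).
move=> /hasP[k hk /allP avk]; exists k => // x s y hx hy hxy.
move: hx hy; rewrite -!mem_labels => hx hy.
rewrite -eP ?mem_bools // -eQ ?mem_bools //.
by have /allP/(_ s (mem_bools s))/allP/(_ y hy)/implyP := avk x hx; apply.
Qed.

(** * Cycles with three lists of size three *)

Section ThreeSpecialLists.
Variables (R : realType) (n : nat) (V : finType) (h : rel V).
Hypotheses (h_sym : symmetric h) (h_irr : irreflexive h).
Local Notation N := n.+1.
Variables (S : 'I_N -> {set V}) (q r : nat) (x0 : V).
Hypotheses (cS : subcover (@cycle_adj N) h S) (qr : 0 < q < r) (rn : r <= n).
Hypothesis card_S : forall v : 'I_N, #|S v| = if (v : nat) \in [:: 0; q; r] then 3 else 2.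

Definition is_special (k : nat) : bool := k \in [:: 0; q; r].

(* Positions are natural numbers read through [inord], so that position [N]
   is position [0] again. *)
Definition list_at (k : nat) : {set V} := S (inord k).

Lemma inord_succ k : k <= n -> (inord k.+1 : 'I_N) = k.+1 %% N :> nat.
Proof.
move=> kn; case: (ltnP k n) => [kn'|nk]; first by rewrite inordK ?modn_small.
have -> : k = n by apply/eqP; rewrite eqn_leq kn nk.
by rewrite modnn /inord /insubd insubN ?ltnn.
Qed.

Lemma list_atN : list_at N = list_at 0.
Proof. by rewrite /list_at; congr S; apply: ord_inj; rewrite inord_succ // modnn inordK. Qed.

Lemma card_list_at k : k <= n -> #|list_at k| = if is_special k then 3 else 2.
Proof. by move=> kn; rewrite card_S inordK. Qed.

Lemma cycle_adj_succ k : k <= n ->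
  cycle_adj (inord k : 'I_N) (inord k.+1) && cycle_adj (inord k.+1 : 'I_N) (inord k).
Proof. by move=> kn; rewrite /cycle_adj inord_succ // inordK ?ltnS // eqxx orbT. Qed.

Lemma match_right k x y y' : k <= n -> x \in list_at k ->
  y \in list_at k.+1 -> y' \in list_at k.+1 -> h x y -> h x y' -> y = y'.
Proof.
move=> kn xk yk y'k hy hy'; have [_ _ hm] := cS; have /andP[adj _] := cycle_adj_succ kn.
by apply: (card_le1_eqP (hm _ _ _ adj xk)); rewrite inE ?yk ?y'k.
Qed.

Lemma match_left k x x' y : k <= n -> x \in list_at k -> x' \in list_at k ->
  y \in list_at k.+1 -> h x y -> h x' y -> x = x'.
Proof.
move=> kn xk x'k yk hy hy'; have [_ _ hm] := cS; have /andP[_ adj] := cycle_adj_succ kn.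
by apply: (card_le1_eqP (hm _ _ _ adj yk)); rewrite inE ?xk ?x'k h_sym.
Qed.

Definition list_elt (k j : nat) : V := nth x0 (enum (list_at k)) j.

Lemma list_elt_in k j : j < #|list_at k| -> list_elt k j \in list_at k.
Proof. by move=> hj; rewrite -mem_enum mem_nth // -cardE. Qed.

Lemma list_elt_inj k i j : i < #|list_at k| -> j < #|list_at k| ->
  (list_elt k i == list_elt k j) = (i == j).
Proof. by move=> hi hj; rewrite nth_uniq ?enum_uniq // -cardE. Qed.

Lemma list_elt_surj k x : x \in list_at k -> exists2 j, j < #|list_at k| & x = list_elt k j.
Proof.
move=> xk; exists (index x (enum (list_at k))); first by rewrite cardE index_mem mem_enum.
by rewrite /list_elt nth_index // mem_enum.
Qed.

(* If some label at [k - 1] is matched to the same label at [k], swap the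
   labels at [k]: then equal labels are never matched ([align_ok]), so one bit
   determines a transversal on a whole run of 2-lists. *)
Definition align (f : bool -> V) (k : nat) (b : bool) : V :=
  list_elt k ((h (f false) (list_elt k false) || h (f true) (list_elt k true)) (+) b).

Fixpoint run_label (k : nat) : bool -> V :=
  if k is k'.+1 then
    if is_special k' then (fun b : bool => list_elt k'.+1 b) else align (run_label k') k'.+1
  else (fun b : bool => list_elt 0 b).

Lemma run_labelE k : 0 < k -> exists c : bool, forall b, run_label k b = list_elt k (c (+) b).
Proof.
by case: k => // k _ /=; case: (is_special k); [exists false | eexists].
Qed.

Lemma is_special0 : is_special 0. Proof. by rewrite /is_special inE. Qed.

Section Interior.
Variable k : nat.
Hypotheses (kn : k <= n) (ks : ~~ is_special k).

Lemma interior_pos : 0 < k.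
Proof. by case: k ks => //; rewrite is_special0. Qed.

Lemma card_interior : #|list_at k| = 2.
Proof. by rewrite card_list_at ?(negbTE ks). Qed.

Lemma run_label_in b : run_label k b \in list_at k.
Proof.
have [c ->] := run_labelE interior_pos.
by apply: list_elt_in; rewrite card_interior; case: (c (+) b).
Qed.

Lemma run_label_inj : injective (run_label k).
Proof.
have [c hc] := run_labelE interior_pos => b b'; rewrite !hc => /eqP.
rewrite list_elt_inj ?card_interior; try by case: (c (+) _).
by case: c b b' {hc} => [] [] [].
Qed.

Lemma run_label_surj x : x \in list_at k -> exists b, x = run_label k b.
Proof.
move=> xk; have [c hc] := run_labelE interior_pos.
have [j] := list_elt_surj xk; rewrite card_interior => hj ->.
by exists (c (+) (j != 0)); rewrite hc addbA addbb; case: j hj => [|[|]].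
Qed.

End Interior.

Lemma align_ok k b : k < n -> ~~ is_special k -> ~~ is_special k.+1 ->
  ~~ h (run_label k b) (run_label k.+1 b).
Proof.
move=> kn ks ks1; have kn' : k <= n := ltnW kn.
have f0 := run_label_in kn' ks false; have f1 := run_label_in kn' ks true.
have fne : run_label k false != run_label k true by apply/eqP => /(run_label_inj kn' ks).
have y0 : list_elt k.+1 false \in list_at k.+1 by rewrite list_elt_in ?card_interior.
have y1 : list_elt k.+1 true \in list_at k.+1 by rewrite list_elt_in ?card_interior.
have yne : list_elt k.+1 false != list_elt k.+1 true by rewrite list_elt_inj ?card_interior.
rewrite /= (negbTE ks) /align; set flip := (_ || _).
case: (boolP flip) => [/orP hc|/norP[h0 h1]]; last by case: b.
case: b; apply/negP => hh; case: hc => hc.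
- by move: fne; rewrite (match_left kn' f0 f1 y0 hc hh) eqxx.
- by move: yne; rewrite (match_right kn' f1 y0 y1 hh hc) eqxx.
- by move: yne; rewrite (match_right kn' f0 y0 y1 hc hh) eqxx.
- by move: fne; rewrite (match_left kn' f0 f1 y1 hh hc) eqxx.
Qed.

Definition arc_pick (k1 k2 x : nat) (s : bool) (y k : nat) : V :=
  if k == k1 then list_elt k1 x else if k == k2 then list_elt k2 y else run_label k s.

(* Inside a run, consecutive picks are never adjacent, so only the ends of an
   arc matter. *)
Definition arc_allows (k1 k2 x : nat) (s : bool) (y : nat) : bool :=
  if k2 == k1.+1 then ~~ h (list_elt k1 x) (list_elt k2 y)
  else ~~ h (list_elt k1 x) (run_label k1.+1 s) && ~~ h (run_label k2.-1 s) (list_elt k2 y).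

Definition is_arc (k1 k2 : nat) : Prop :=
  [/\ k1 < k2 <= N, is_special k1, is_special (k2 %% N) & forall k, k1 < k < k2 -> ~~ is_special k].

Section Arc.
Variables k1 k2 : nat.
Hypothesis arc : is_arc k1 k2.

Lemma card_arc_ends : #|list_at k1| = 3 /\ #|list_at k2| = 3.
Proof.
have [/andP[k12 k2N] sp1 sp2 _] := arc.
have k1n : k1 <= n by rewrite -ltnS (leq_trans k12 k2N).
rewrite card_list_at // sp1; split => //.
move: k2N sp2; rewrite leq_eqVlt => /predU1P[->|k2N].
  by rewrite list_atN modnn card_list_at // => ->.
by rewrite modn_small // card_list_at // => ->.
Qed.

Lemma arc_interior k : k1 < k < k2 -> k <= n /\ ~~ is_special k.
Proof.
move=> k1kk2; have [/andP[_ k2N] _ _ hint] := arc; split; last exact: hint.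
by case/andP: k1kk2 => _ kk2; rewrite -ltnS (leq_trans kk2 k2N).
Qed.

Lemma arc_pick_in x s y k : x < 3 -> y < 3 -> k1 <= k <= k2 ->
  arc_pick k1 k2 x s y k \in list_at k.
Proof.
have [c1 c2] := card_arc_ends => hx hy /andP[k1k kk2]; rewrite /arc_pick.
case: eqP => [->|/eqP nk1]; first by rewrite list_elt_in ?c1.
case: eqP => [->|/eqP nk2]; first by rewrite list_elt_in ?c2.
have [kn ks] : k <= n /\ ~~ is_special k.
  by apply: arc_interior; rewrite !ltn_neqAle eq_sym nk1 k1k nk2 kk2.
exact: run_label_in.
Qed.

Lemma arc_pick_indep x s y : arc_allows k1 k2 x s y ->
  forall k, k1 <= k < k2 -> ~~ h (arc_pick k1 k2 x s y k) (arc_pick k1 k2 x s y k.+1).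
Proof.
have [/andP[k12 k2N] _ _ _] := arc.
rewrite /arc_allows /arc_pick => ok k /andP[k1k kk2]; rewrite (ltn_eqF kk2).
case: (k =P k1) => [->|/eqP nk1]; rewrite ?(gtn_eqF (ltnSn k1)) ?eqxx.
  case: (k1.+1 =P k2) => [e|/eqP ne]; first by move: ok; rewrite -e eqxx.
  by move: ok; rewrite eq_sym (negbTE ne) => /andP[].
have k1k' : k1 < k by rewrite ltn_neqAle eq_sym nk1.
rewrite (gtn_eqF (leq_trans k1k' (leqnSn k))).
case: (k.+1 =P k2) => [e|/eqP ne].
  move: ok; rewrite -e eqSS (gtn_eqF k1k') /= => /andP[_]; exact.
have kk2' : k.+1 < k2 by rewrite ltn_neqAle ne.
have [_ ks] : k <= n /\ ~~ is_special k by apply: arc_interior; rewrite k1k'.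
have [kn ks1] : k.+1 <= n /\ ~~ is_special k.+1 by apply: arc_interior; rewrite kk2' andbT ltnW.
exact: align_ok.
Qed.

Lemma arc_link : exists2 c, c \in links & forall x s y, x < 3 -> y < 3 ->
  link_allows c x s y -> arc_allows k1 k2 x s y.
Proof.
have [/andP[k12 k2N] _ _ _] := arc; have [c1 c2] := card_arc_ends.
have k1n : k1 <= n by rewrite -ltnS (leq_trans k12).
have elt1 j : j \in labels -> list_elt k1 j \in list_at k1.
  by rewrite mem_labels => hj; rewrite list_elt_in ?c1.
have elt2 j : j \in labels -> list_elt k2 j \in list_at k2.
  by rewrite mem_labels => hj; rewrite list_elt_in ?c2.
have inj1 i j : i \in labels -> j \in labels -> list_elt k1 i = list_elt k1 j -> i = j.
  by rewrite !mem_labels => hi hj /eqP; rewrite list_elt_inj ?c1 // => /eqP.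
have inj2 i j : i \in labels -> j \in labels -> list_elt k2 i = list_elt k2 j -> i = j.
  by rewrite !mem_labels => hi hj /eqP; rewrite list_elt_inj ?c2 // => /eqP.
rewrite /arc_allows; case: (k2 =P k1.+1) => [e|/eqP ne].
  have [|c hc allow] := @direct_link_exists (fun x y => h (list_elt k1 x) (list_elt k2 y)).
    apply: partial_matchingW => [x y y' hx hy hy' e1 e2|x x' y hx hx' hy e1 e2].
      by apply: inj2 => //; apply: match_right k1n (elt1 _ hx) _ _ e1 e2; rewrite -e elt2.
    by apply: inj1 => //; apply: match_left k1n (elt1 _ hx) (elt1 _ hx') _ e1 e2; rewrite -e elt2.
  by exists c.
have k12' : k1.+1 < k2 by rewrite ltn_neqAle eq_sym ne.
have [m1 s1] := @arc_interior k1.+1 (introT andP (conj (ltnSn k1) k12')).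
have k2p : k2.-1.+1 = k2 by rewrite prednK // (leq_trans _ k12).
have [m2 s2] : k2.-1 <= n /\ ~~ is_special k2.-1.
  by apply: arc_interior; lia.
have [||c hc allow] := @run_link_exists (fun x s => h (list_elt k1 x) (run_label k1.+1 s))
                                        (fun s y => h (run_label k2.-1 s) (list_elt k2 y)).
- apply: partial_matchingW => [x s s' hx _ _ e1 e2|x x' s hx hx' _ e1 e2].
    exact: run_label_inj m1 s1 _ _ (match_right k1n (elt1 _ hx) (run_label_in m1 s1 _)
                                      (run_label_in m1 s1 _) e1 e2).
  exact: inj1 hx hx' (match_left k1n (elt1 _ hx) (elt1 _ hx') (run_label_in m1 s1 _) e1 e2).
- have elt2' j : j \in labels -> list_elt k2 j \in list_at k2.-1.+1 by rewrite k2p; exact: elt2.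
  apply: partial_matchingW => [s y y' _ hy hy' e1 e2|s s' y _ _ hy e1 e2].
    exact: inj2 hy hy' (match_right m2 (run_label_in m2 s2 _) (elt2' _ hy) (elt2' _ hy') e1 e2).
  exact: run_label_inj m2 s2 _ _ (match_left m2 (run_label_in m2 s2 _)
                                    (run_label_in m2 s2 _) (elt2' _ hy) e1 e2).
- by exists c.
Qed.

End Arc.

Lemma arc_0q : is_arc 0 q.
Proof.
split; rewrite ?is_special0 /is_special ?modn_small ?inE ?eqxx ?orbT //; try lia.
by move=> k; rewrite !inE; lia.
Qed.

Lemma arc_qr : is_arc q r.
Proof.
split; rewrite /is_special ?modn_small ?inE ?eqxx ?orbT //; try lia.
by move=> k; rewrite !inE; lia.
Qed.

Lemma arc_rN : is_arc r N.
Proof.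
split; rewrite /is_special ?modnn ?inE ?eqxx ?orbT //; try lia.
by move=> k; rewrite !inE; lia.
Qed.

Definition config_pick (w : config) (k : nat) : V :=
  if k < q then arc_pick 0 q (lab0 w) (bit1 w) (labq w) k
  else if k < r then arc_pick q r (labq w) (bit2 w) (labr w) k
  else arc_pick r N (labr w) (bit3 w) (lab0 w) k.

Definition config_fits (w : config) : Prop :=
  [/\ [&& lab0 w < 3, labq w < 3 & labr w < 3],
      arc_allows 0 q (lab0 w) (bit1 w) (labq w),
      arc_allows q r (labq w) (bit2 w) (labr w) &
      arc_allows r N (labr w) (bit3 w) (lab0 w)].

Lemma config_pick_0q w k : k <= q -> config_pick w k = arc_pick 0 q (lab0 w) (bit1 w) (labq w) k.
Proof.
rewrite /config_pick leq_eqVlt => /predU1P[->|->] //; rewrite ltnn (proj2 (andP qr)).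
by rewrite /arc_pick eqxx (gtn_eqF (proj1 (andP qr))).
Qed.

Lemma config_pick_qr w k : q <= k <= r ->
  config_pick w k = arc_pick q r (labq w) (bit2 w) (labr w) k.
Proof.
rewrite /config_pick => /andP[qk]; rewrite ltnNge qk /= leq_eqVlt => /predU1P[->|->] //.
by rewrite ltnn /arc_pick eqxx (gtn_eqF (proj2 (andP qr))).
Qed.

Lemma config_pick_rN w k : r <= k -> config_pick w k = arc_pick r N (labr w) (bit3 w) (lab0 w) k.
Proof.
move=> rk; have qk : q <= k by case/andP: qr => _ /ltnW/leq_trans; apply.
by rewrite /config_pick !ltnNge qk rk.
Qed.

Lemma config_pick_in w k : config_fits w -> k <= n -> config_pick w k \in list_at k.
Proof.
move=> [/and3P[h0 hq hr] _ _ _] kn; case: (leqP k q) => [kq|qk].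
  by rewrite config_pick_0q //; apply: (arc_pick_in arc_0q); rewrite ?kq.
case: (leqP k r) => [kr|rk].
  by rewrite config_pick_qr ?(ltnW qk) //; apply: (arc_pick_in arc_qr); rewrite ?(ltnW qk).
by rewrite config_pick_rN ?(ltnW rk) //; apply: (arc_pick_in arc_rN); rewrite ?(ltnW rk) ?(leqW kn).
Qed.

Lemma config_pick_next w k : config_fits w -> k <= n -> ~~ h (config_pick w k) (config_pick w k.+1).
Proof.
move=> [_ ok1 ok2 ok3] kn; case: (ltnP k q) => [kq|qk].
  by rewrite !config_pick_0q ?(ltnW kq) //; apply: (arc_pick_indep arc_0q ok1); rewrite kq.
case: (ltnP k r) => [kr|rk].
  rewrite !config_pick_qr ?qk ?(leqW qk) ?kr ?(ltnW kr) //.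
  by apply: (arc_pick_indep arc_qr ok2); rewrite qk kr.
rewrite !config_pick_rN ?(leqW rk) //.
by apply: (arc_pick_indep arc_rN ok3); rewrite rk ltnS.
Qed.

Lemma config_pickN w : config_pick w N = config_pick w 0.
Proof.
rewrite config_pick_rN ?config_pick_0q ?(leqW rn) // /arc_pick (gtn_eqF (rn : r < N)) !eqxx.
by rewrite /list_elt list_atN.
Qed.

Definition config_transversal (w : config) : {set V} := [set config_pick w k | k : 'I_N].

Lemma config_pick_inS w (v : 'I_N) : config_fits w -> config_pick w v \in S v.
Proof. by move=> fw; have := config_pick_in fw (ltn_ord v); rewrite /list_at inord_val. Qed.

Lemma mem_config_transversal w (v : 'I_N) x : config_fits w -> x \in S v ->
  (x \in config_transversal w) = (config_pick w v == x).
Proof.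
move=> fw xv; have [hd _ _] := cS; apply/imsetP/eqP => [[u _ xE]|<-]; last by exists v.
by move: xv; rewrite xE => xv; rewrite (hd _ _ _ (config_pick_inS u fw) xv).
Qed.

Lemma config_pick_next_mod w (u : 'I_N) : config_fits w ->
  ~~ h (config_pick w u) (config_pick w (u.+1 %% N)).
Proof.
move=> fw; have un : u <= n := ltn_ord u.
case: (ltnP u.+1 N) => [uN|Nu]; first by rewrite modn_small // config_pick_next.
have uN : u.+1 = N by apply/eqP; rewrite eqn_leq Nu ltn_ord.
have -> : u.+1 %% N = 0 by rewrite uN modnn.
have -> : config_pick w 0 = config_pick w u.+1 by rewrite uN config_pickN.
exact: config_pick_next.
Qed.

Lemma config_transversal_ok w : config_fits w ->
  independent h (config_transversal w) && transversal_of S (config_transversal w).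
Proof.
move=> fw; have [_ hn _] := cS; apply/andP; split; last (apply/andP; split).
- apply/forallP => x; apply/implyP => /imsetP[u _ ->].
  apply/forallP => y; apply/implyP => /imsetP[v _ ->].
  case: (u =P v) => [->|/eqP uv]; first by rewrite h_irr.
  case: (boolP (cycle_adj u v)) => [/orP[]/eqP->|nadj].
  - exact: config_pick_next_mod.
  - by rewrite h_sym config_pick_next_mod.
  - exact: hn (config_pick_inS u fw) (config_pick_inS v fw).
- apply/forallP => v.
  suff -> : config_transversal w :&: S v = [set config_pick w v] by rewrite cards1.
  apply/setP => x; rewrite !inE; case: (boolP (x \in S v)) => xv.
    by rewrite andbT (mem_config_transversal fw xv) eq_sym.
  by rewrite andbF; apply/esym/negbTE; apply: contra xv => /eqP ->; exact: config_pick_inS.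
- apply/subsetP => x /imsetP[u _ ->]; apply/bigcupP; exists u => //; exact: config_pick_inS.
Qed.

Lemma config_pick0 w : config_pick w 0 = list_elt 0 (lab0 w).
Proof. by rewrite config_pick_0q // /arc_pick eqxx. Qed.

Lemma config_pickq w : config_pick w q = list_elt q (labq w).
Proof. by rewrite config_pick_qr ?leqnn ?(ltnW (proj2 (andP qr))) // /arc_pick eqxx. Qed.

Lemma config_pickr w : config_pick w r = list_elt r (labr w).
Proof. by rewrite config_pick_rN // /arc_pick eqxx. Qed.

Lemma config_pick_interior w k : k <= n -> ~~ is_special k ->
  config_pick w k = run_label k (if k < q then bit1 w else if k < r then bit2 w else bit3 w).
Proof.
move=> kn; rewrite /is_special !inE !negb_or => /and3P[/negbTE k0 /negbTE kq /negbTE kr].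
rewrite /config_pick /arc_pick k0 kq kr (ltn_eqF (kn : k < N)).
by case: ifP => _; last case: ifP.
Qed.

Lemma count_config_pick_special (W : seq config) (f : config -> nat) k x :
  k <= n -> is_special k -> x \in list_at k ->
  {in W, forall w, f w < 3 /\ config_pick w k = list_elt k (f w)} ->
  balanced f W -> count (fun w => config_pick w k == x) W = 2.
Proof.
move=> kn ks xk fW /allP bal; have k3 : #|list_at k| = 3 by rewrite card_list_at // ks.
have [j] := list_elt_surj xk; rewrite k3 => j3 ->.
rewrite -(eqP (bal j _)) ?mem_labels //; apply: eq_in_count => w /fW[fw3 ->].
by rewrite list_elt_inj ?k3.
Qed.

Lemma count_config_pick_interior (W : seq config) (g : config -> bool) k x :
  k <= n -> ~~ is_special k -> x \in list_at k ->
  {in W, forall w, config_pick w k = run_label k (g w)} ->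
  size W = 6 -> count g W = 3 -> count (fun w => config_pick w k == x) W = 3.
Proof.
move=> kn ks xk gW W6 g3; have [b ->] := run_label_surj kn ks xk.
rewrite (eq_in_count (a2 := fun w => g w == b)); last first.
  by move=> w /gW ->; apply/eqP/eqP => [/(run_label_inj kn ks)|->].
case: b; first by rewrite -g3; apply: eq_count => w; case: (g w).
have := count_predC g W; rewrite g3 W6 => e.
by rewrite (eq_count (a2 := predC g)) => [|w /=]; [lia | case: (g w)].
Qed.

Lemma has_packing_three : has_packing R h S.
Proof.
have [c1 c1l allow1] := arc_link arc_0q.
have [c2 c2l allow2] := arc_link arc_qr.
have [c3 c3l allow3] := arc_link arc_rN.
have := witness_correct c1l c2l c3l; set W := witness c1 c2 c3.
move=> /and4P[/eqP W6 /allP Wok /and3P[bal0 balq balr] /and3P[/eqP cnt1 /eqP cnt2 /eqP cnt3]].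
have fits_W w : w \in W -> config_fits w.
  move=> /Wok /and5P[h0 hq hr l1 /andP[l2 l3]].
  by split; [rewrite h0 hq hr | exact: allow1 | exact: allow2 | exact: allow3].
apply: (@uniform_packing _ _ _ _ _ (map config_transversal W)).
- by rewrite size_map W6.
- by apply/allP => _ /mapP[w /fits_W fw ->]; exact: config_transversal_ok.
move=> v x xv; have vn : v <= n := ltn_ord v.
have xv' : x \in list_at v by rewrite /list_at inord_val.
rewrite size_map W6 count_map (eq_in_count (a2 := fun w => config_pick w v == x)); last first.
  by move=> w /fits_W fw; rewrite /= (mem_config_transversal fw xv).
rewrite card_S -/(is_special v); case: ifP => vs.
  suff [f fW balf] : exists2 f : config -> nat,
      {in W, forall w, f w < 3 /\ config_pick w v = list_elt v (f w)} & balanced f W.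
    by rewrite (count_config_pick_special vn vs xv' fW).
  move: (vs); rewrite /is_special !inE => /or3P[] /eqP vE; rewrite vE;
    [exists lab0 | exists labq | exists labr] => // w /fits_W[/and3P[? ? ?] _ _ _];
    by rewrite ?config_pick0 ?config_pickq ?config_pickr.
rewrite (count_config_pick_interior (g := fun w => if v < q then bit1 w else if v < r then bit2 w
                                              else bit3 w)) ?vs //.
- by move=> w _; rewrite config_pick_interior ?vs.
- by case: (v < q); last case: (v < r).
Qed.

End ThreeSpecialLists.

Theorem mainTheorem14 (R : realType) (n : nat) (V : finType) (h : rel V)
    (L : 'I_n -> {set V}) :
  (3 <= n)%N ->
  correspondence_cover (@cycle_adj n) h L ->
  (forall v, 2 <= #|L v|)%N ->
  (3 <= #|[set v | 3 <= #|L v|]|)%N ->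
  fractional_packing R h L.
Proof.
case: n L => [//|n] L _ [[h_sym h_irr] [_ [L_disj [_ [L_nonadj L_match]]]]] L2 L3.
have cL : subcover (@cycle_adj n.+1) h L by split => // u v x; exact: L_disj.
have [x0 _] : exists x, x \in L ord0 by apply/set0Pn; rewrite -card_gt0 (leq_trans _ (L2 _)).
have three S q r cS qr rn card_S :=
  @has_packing_three R n V h h_sym (fun x => negbTE (h_irr x)) S q r x0 cS qr rn card_S.
have [w [w0 wT w1 wm]] := has_packing_of_core (has_packing_of_normal three) cL L2 L3.
exists w; split; first exact: w0.
split; last by split.
by move=> T /wT /andP[indT /andP[one _]]; apply/andP.
Qed.
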